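(* Let $f$ be analytic on $\mathbb{D}$ with $0<\operatorname{Diam} f(\mathbb{D})<\infty$. Then for all $z,w\in\mathbb{D}$, \[ \frac{|f(z)-f(w)|}{\operatorname{Diam} f(\mathbb{D})}\le \frac{|z-w|}{|1-\bar w z|+\sqrt{(1-|z|^2)(1-|w|^2)}}. \]
   Context: $\mathbb{D}$ is the open unit disk; $\operatorname{Diam}E=\sup_{z,w\in E}|z-w|$. *)

From Stdlib Require Import Reals.
From Coquelicot Require Import Coquelicot.
Open Scope R_scope.

Definition unit_disk (z : C) : Prop := Cmod z < 1.

Definition analytic_on_disk (f : C -> C) : Prop :=
  forall z : C, unit_disk z -> @ex_derive C_AbsRing C_NormedModule f z.

Definition diam_image_disk (f : C -> C) : Rbar :=
  Lub_Rbar (fun r : R => exists z w : C,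
    unit_disk z /\ unit_disk w /\ r = Cmod (f z - f w)%C).

From Stdlib Require Import Reals Lra FunctionalExtensionality Classical.
From Coquelicot Require Import Coquelicot.
Open Scope R_scope.

(** Schwarz-Pick, two-point form.  Given [z <> w] in the disk, a Mobius map
    [phi] of the disk sends [r] to [z] and [-r] to [w], where [r] is exactly the
    right-hand side of the inequality.  Then [g x = f (phi x) - f (phi (-x))]
    is holomorphic on the disk, vanishes at 0 and is bounded by [Diam f(D)], so
    the Schwarz lemma gives [|f z - f w| = |g r| <= Diam f(D) * r].

    The Schwarz lemma is proved from Cauchy's estimate, applied to the powers of
    [g z / z] to get the maximum principle.  Cauchy's integral formula on circles
    comes from Goursat's theorem for polar rectangles [{r e^(it)}] (by
    quadrisection), allowing one exceptional point where the integrand is only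
    continuous, applied to the difference quotient of the function. *)

Notation is_derive_C := (@is_derive C_AbsRing C_NormedModule).
Notation ex_derive_C := (@ex_derive C_AbsRing C_NormedModule).
Notation continuous_C := (@continuous C_UniformSpace C_UniformSpace).
Notation is_derive_path := (@is_derive R_AbsRing C_R_NormedModule).
Notation continuous_path := (@continuous R_UniformSpace C_UniformSpace).
Notation RInt_C := (@RInt C_R_CompleteNormedModule).

Lemma Cmod_le_Rabs_re_im (z : C) : Cmod z <= Rabs (fst z) + Rabs (snd z).
Proof.
  destruct z as [a b]. unfold Cmod; simpl.
  apply Rsqr_incr_0_var. 2: pose proof (Rabs_pos a); pose proof (Rabs_pos b); lra.
  rewrite Rsqr_sqrt by nra. unfold Rsqr.
  assert (a*a = Rabs a * Rabs a) by (rewrite <- Rabs_mult; rewrite Rabs_right; nra).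
  assert (b*b = Rabs b * Rabs b) by (rewrite <- Rabs_mult; rewrite Rabs_right; nra).
  pose proof (Rabs_pos a); pose proof (Rabs_pos b). nra.
Qed.

Lemma Cmod_sub_eq0 (w a : C) : Cmod (w - a)%C = 0 -> w = a.
Proof. intros H. apply Cmod_eq_0 in H. replace w with ((w - a) + a)%C by ring. rewrite H. ring. Qed.

(** C carries two uniform structures: the product one ([C_UniformSpace]) and the
    one of the absolute ring ([Cmod]-balls); they have the same neighbourhoods. *)

Lemma locally_C_of_AbsRing (z : C) (P : C -> Prop) :
  locally (T:=AbsRing_UniformSpace C_AbsRing) z P -> locally (T:=C_UniformSpace) z P.
Proof.
  intros [eps H]. assert (he : 0 < eps / 2) by (destruct eps; simpl; lra).
  exists (mkposreal _ he). intros y [H1 H2]. apply H.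
  change (Cmod (y - z)%C < eps).
  change (Rabs (fst y - fst z) < eps / 2) in H1.
  change (Rabs (snd y - snd z) < eps / 2) in H2.
  eapply Rle_lt_trans. apply Cmod_le_Rabs_re_im. destruct y, z; simpl in *. unfold Rminus in *. lra.
Qed.

Lemma locally_AbsRing_of_C (z : C) (P : C -> Prop) :
  locally (T:=C_UniformSpace) z P -> locally (T:=AbsRing_UniformSpace C_AbsRing) z P.
Proof.
  intros [eps H]. exists eps. intros y Hy. apply H.
  change (Cmod (y - z)%C < eps) in Hy.
  pose proof (Rmax_Cmod (y - z)%C).
  pose proof (Rmax_l (Rabs (fst (y - z)%C)) (Rabs (snd (y - z)%C))).
  pose proof (Rmax_r (Rabs (fst (y - z)%C)) (Rabs (snd (y - z)%C))).
  destruct y, z; simpl in *. unfold Rminus in *.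
  split; [change (Rabs (r + - r1) < eps) | change (Rabs (r0 + - r2) < eps)]; lra.
Qed.

Lemma locally_C_ball (z : C) (d : R) (P : C -> Prop) : 0 < d ->
  (forall w, Cmod (w - z)%C < d -> P w) -> locally (T:=AbsRing_UniformSpace C_AbsRing) z P.
Proof. intros Hd H. exists (mkposreal d Hd). intros y Hy. apply H. exact Hy. Qed.

Lemma continuous_C_eps (K : C -> C) (z : C) : continuous_C K z ->
  forall eps, 0 < eps -> exists d, 0 < d /\ forall w, Cmod (w - z)%C < d -> Cmod (K w - K z)%C < eps.
Proof.
  intros H eps Heps.
  assert (He2 : 0 < eps / 2) by lra.
  assert (Hl := H (ball (K z) (mkposreal _ He2)) (locally_ball _ _)).
  apply locally_AbsRing_of_C in Hl. destruct Hl as [d Hd].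
  exists d. split. apply cond_pos. intros w Hw. destruct (Hd w Hw) as [H1 H2].
  change (Rabs (fst (K w) - fst (K z)) < eps / 2) in H1.
  change (Rabs (snd (K w) - snd (K z)) < eps / 2) in H2.
  eapply Rle_lt_trans. apply Cmod_le_Rabs_re_im. destruct (K w), (K z); simpl in *. unfold Rminus in *. lra.
Qed.

Lemma continuous_C_of_eps (K : C -> C) (z : C) :
  (forall eps, 0 < eps -> exists d, 0 < d /\ forall w, Cmod (w - z)%C < d -> Cmod (K w - K z)%C <= eps) ->
  continuous_C K z.
Proof.
  intros H P [eps HP].
  destruct (H (eps / 2)) as [d [Hd Hw]]. destruct eps; simpl; lra.
  apply locally_C_of_AbsRing. exists (mkposreal d Hd). intros w Hwd. apply HP.
  specialize (Hw w Hwd). pose proof (Rmax_Cmod (K w - K z)%C).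
  pose proof (Rmax_l (Rabs (fst (K w - K z)%C)) (Rabs (snd (K w - K z)%C))).
  pose proof (Rmax_r (Rabs (fst (K w - K z)%C)) (Rabs (snd (K w - K z)%C))).
  assert (He : 0 < eps) by (destruct eps; simpl; lra).
  destruct (K w), (K z); simpl in *. unfold Rminus in *.
  split; [change (Rabs (r + - r1) < eps) | change (Rabs (r0 + - r2) < eps)]; lra.
Qed.

Lemma continuous_C_mult {T : UniformSpace} (f g : T -> C) (x : T) :
  continuous (U:=C_UniformSpace) f x -> continuous (U:=C_UniformSpace) g x ->
  continuous (U:=C_UniformSpace) (fun y => (f y * g y)%C) x.
Proof.
  intros Hf Hg P HP. apply (continuous_mult (K:=C_AbsRing) f g).
  - intros Q HQ. apply Hf, locally_C_of_AbsRing, HQ.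
  - intros Q HQ. apply Hg, locally_C_of_AbsRing, HQ.
  - apply locally_AbsRing_of_C, HP.
Qed.

Lemma continuous_C_affine (c L z0 z : C) : continuous_C (fun w => c + L * (w - z0))%C z.
Proof.
  apply (continuous_plus (K:=C_AbsRing) (V:=C_NormedModule)). apply continuous_const.
  apply continuous_C_mult. apply continuous_const.
  apply (continuous_minus (K:=C_AbsRing) (V:=C_NormedModule)). apply continuous_id. apply continuous_const.
Qed.

Lemma ex_derive_C_continuous (K : C -> C) (z : C) : ex_derive_C K z -> continuous_C K z.
Proof.
  intros H P HP. apply locally_C_of_AbsRing.
  apply (ex_derive_continuous (K:=C_AbsRing) (V:=C_NormedModule) K z H). exact HP.
Qed.

(** [is_derive_C] differentiates into [C_NormedModule], while Coquelicot's
    product and identity rules are stated for [AbsRing_NormedModule C_AbsRing];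
    the two differ only in how the normed-module structure is packaged. *)

Lemma is_derive_C_of_AbsRing (f : C -> C) (z l : C) :
  is_derive (K:=C_AbsRing) (V:=AbsRing_NormedModule C_AbsRing) f z l -> is_derive_C f z l.
Proof. intros [[H1 H2 H3] Hd]. split; [split|]; assumption. Qed.

Lemma is_derive_AbsRing_of_C (f : C -> C) (z l : C) :
  is_derive_C f z l -> is_derive (K:=C_AbsRing) (V:=AbsRing_NormedModule C_AbsRing) f z l.
Proof. intros [[H1 H2 H3] Hd]. split; [split|]; assumption. Qed.

Lemma is_derive_C_inv (z : C) : z <> 0%C -> is_derive_C Cinv z (- / (z * z))%C.
Proof.
  intros Hz. split. apply is_linear_scal_l.
  intros x Hx. assert (Hxz : x = z).
  { symmetry. apply (is_filter_lim_locally_unique (K:=C_AbsRing) (V:=AbsRing_NormedModule C_AbsRing)). exact Hx. }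
  subst x. intros [eps He]. simpl.
  assert (Hm : 0 < Cmod z) by (apply Cmod_gt_0; exact Hz).
  set (d := Rmin (Cmod z / 2) (eps * (Cmod z * Cmod z * Cmod z) / 2)).
  assert (Hd : 0 < d) by (unfold d; apply Rmin_pos; [lra | apply Rdiv_lt_0_compat; [apply Rmult_lt_0_compat; [lra | apply Rmult_lt_0_compat; nra] | lra]]).
  apply (locally_C_ball z d); auto. intros y Hy.
  change (Cmod (/ y - / z - (y - z) * (- / (z * z)))%C <= eps * Cmod (y - z)%C).
  assert (Hd1 : d <= Cmod z / 2) by apply Rmin_l.
  assert (Hd2 : d <= eps * (Cmod z * Cmod z * Cmod z) / 2) by apply Rmin_r.
  assert (Hy1 : Cmod y >= Cmod z / 2).
  { assert (Cmod z <= Cmod y + Cmod (y - z)%C).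
    { replace z with (y - (y - z))%C at 1 by ring. eapply Rle_trans. apply Cmod_triangle. rewrite Cmod_opp. lra. }
    lra. }
  assert (Hy0 : y <> 0%C) by (intro E; rewrite E, Cmod_0 in Hy1; lra).
  (* the error term is (y - z)^2 / (y z^2), with |y| >= |z|/2 and |y - z| < d *)
  replace (/ y - / z - (y - z) * (- / (z * z)))%C with ((y - z) * (y - z) / (y * (z * z)))%C by (field; auto).
  rewrite Cmod_div, !Cmod_mult by (repeat apply Cmult_neq_0; auto).
  pose proof (Cmod_ge_0 (y - z)%C).
  assert (Hp : 0 < Cmod y * (Cmod z * Cmod z)) by (apply Rmult_lt_0_compat; nra).
  apply (Rmult_le_reg_r (Cmod y * (Cmod z * Cmod z))); auto.
  unfold Rdiv. rewrite Rmult_assoc, Rinv_l, Rmult_1_r by lra.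
  assert (Cmod (y - z)%C * Cmod (y - z)%C <= Cmod (y - z)%C * (eps * (Cmod z * Cmod z * Cmod z) / 2))
    by (apply Rmult_le_compat_l; lra).
  assert (eps * (Cmod z * Cmod z * Cmod z) / 2 <= eps * (Cmod y * (Cmod z * Cmod z))).
  { replace (eps * (Cmod z * Cmod z * Cmod z) / 2) with (eps * ((Cmod z / 2) * (Cmod z * Cmod z))) by field.
    apply Rmult_le_compat_l. lra. apply Rmult_le_compat_r; nra. }
  assert (Cmod (y - z)%C * (eps * (Cmod z * Cmod z * Cmod z) / 2)
          <= Cmod (y - z)%C * (eps * (Cmod y * (Cmod z * Cmod z)))) by (apply Rmult_le_compat_l; lra).
  lra.
Qed.

Lemma ex_derive_C_id (z : C) : ex_derive_C (fun w => w) z.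
Proof. exists one. apply is_derive_C_of_AbsRing, (is_derive_id (K:=C_AbsRing)). Qed.

Lemma ex_derive_C_const (c z : C) : ex_derive_C (fun _ => c) z.
Proof. exists zero. apply is_derive_C_of_AbsRing, (is_derive_const (K:=C_AbsRing) (V:=AbsRing_NormedModule C_AbsRing)). Qed.

Lemma ex_derive_C_plus (f g : C -> C) (z : C) :
  ex_derive_C f z -> ex_derive_C g z -> ex_derive_C (fun w => f w + g w)%C z.
Proof. intros [a Ha] [b Hb]. exists (plus a b). apply (is_derive_plus f g z a b Ha Hb). Qed.

Lemma ex_derive_C_minus (f g : C -> C) (z : C) :
  ex_derive_C f z -> ex_derive_C g z -> ex_derive_C (fun w => f w - g w)%C z.
Proof. intros [a Ha] [b Hb]. exists (minus a b). apply (is_derive_minus f g z a b Ha Hb). Qed.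

Lemma ex_derive_C_mult (f g : C -> C) (z : C) :
  ex_derive_C f z -> ex_derive_C g z -> ex_derive_C (fun w => f w * g w)%C z.
Proof.
  intros [a Ha] [b Hb]. eexists. apply is_derive_C_of_AbsRing.
  apply (is_derive_mult (K:=C_AbsRing) f g z a b); try apply is_derive_AbsRing_of_C; auto.
  exact Cmult_comm.
Qed.

Lemma ex_derive_C_comp (f g : C -> C) (z : C) :
  ex_derive_C g z -> ex_derive_C f (g z) -> ex_derive_C (fun w => f (g w)) z.
Proof.
  intros [a Ha] [b Hb]. eexists.
  apply (is_derive_comp (K:=C_AbsRing) (V:=C_NormedModule) f g z b a Hb), is_derive_AbsRing_of_C, Ha.
Qed.

Lemma ex_derive_C_inv (f : C -> C) (z : C) :
  ex_derive_C f z -> f z <> 0%C -> ex_derive_C (fun w => / f w)%C z.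
Proof. intros Hf Hz. apply (ex_derive_C_comp Cinv f z Hf). eexists. apply is_derive_C_inv, Hz. Qed.

Lemma ex_derive_C_div (f g : C -> C) (z : C) :
  ex_derive_C f z -> ex_derive_C g z -> g z <> 0%C -> ex_derive_C (fun w => f w / g w)%C z.
Proof. intros Hf Hg Hz. apply ex_derive_C_mult; [exact Hf | apply ex_derive_C_inv; auto]. Qed.

Lemma ex_derive_C_pow (f : C -> C) (z : C) (n : nat) :
  ex_derive_C f z -> ex_derive_C (fun w => (f w) ^ n)%C z.
Proof.
  intros Hf. induction n as [|n IH]; simpl.
  - apply ex_derive_C_const.
  - apply ex_derive_C_mult; auto.
Qed.

Lemma ex_derive_C_sub_const (a z : C) : ex_derive_C (fun w => w - a)%C z.
Proof. apply ex_derive_C_minus; [apply ex_derive_C_id | apply ex_derive_C_const]. Qed.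

Lemma is_derive_C_quadratic (a b z : C) :
  is_derive_C (fun w => a * w + b * (w * w))%C z (a + b * (2 * z))%C.
Proof.
  apply is_derive_C_of_AbsRing.
  assert (Hid := is_derive_id (K:=C_AbsRing) z).
  assert (Hc := fun c => is_derive_const (K:=C_AbsRing) (V:=AbsRing_NormedModule C_AbsRing) c z).
  assert (H1 := is_derive_mult (K:=C_AbsRing) (fun _ => a) (fun w => w) z zero one (Hc a) Hid Cmult_comm).
  assert (H2 := is_derive_mult (K:=C_AbsRing) (fun w => w) (fun w => w) z one one Hid Hid Cmult_comm).
  assert (H3 := is_derive_mult (K:=C_AbsRing) (fun _ => b) (fun w => w * w)%C z zero _ (Hc b) H2 Cmult_comm).
  assert (H4 := is_derive_plus (K:=C_AbsRing) (V:=AbsRing_NormedModule C_AbsRing) _ _ z _ _ H1 H3).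
  simpl in H4. unfold plus, mult, zero, one in H4; simpl in H4.
  replace (a + b * (2 * z))%C with
    (0 * z + a * 1 + (0 * (z * z) + b * (1 * z + z * 1)))%C by ring.
  exact H4.
Qed.

Lemma ex_derive_C_ext_loc (f g : C -> C) (z : C) :
  locally (T:=AbsRing_UniformSpace C_AbsRing) z (fun w => f w = g w) ->
  ex_derive_C f z -> ex_derive_C g z.
Proof. intros H [a Ha]. exists a. eapply is_derive_ext_loc; eauto. Qed.

Lemma norm_C_R (z : C) : norm (K:=R_AbsRing) (V:=C_R_NormedModule) z = Cmod z.
Proof.
  unfold norm; simpl. unfold prod_norm, Cmod; simpl. unfold norm; simpl.
  unfold abs; simpl. f_equal. rewrite !Rmult_1_r, <- !Rabs_mult, !Rabs_right; try reflexivity; nra.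
Qed.

Lemma scal_C_R (r : R) (z : C) : scal (V:=C_R_NormedModule) r z = (RtoC r * z)%C.
Proof.
  destruct z as [a b]. unfold scal; simpl. unfold prod_scal; simpl.
  unfold scal; simpl. unfold mult; simpl. apply injective_projections; simpl; ring.
Qed.

Lemma filterdiff_R_of_is_derive_C (P : C -> C) (z l : C) :
  is_derive_C P z l ->
  filterdiff (K:=R_AbsRing) (U:=C_R_NormedModule) (V:=C_R_NormedModule) P
     (locally z) (fun h => (l * h)%C).
Proof.
  intros [_ H]. split.
  - split.
    + intros x y. change (@eq C (l * (x + y))%C (l * x + l * y)%C). ring.
    + intros k x. rewrite !scal_C_R. change (@eq C (l * (k * x))%C (k * (l * x))%C). ring.
    + exists (Cmod l + 1). split. pose proof (Cmod_ge_0 l); lra.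
      intros x. rewrite !norm_C_R. change (Cmod (l * x)%C <= (Cmod l + 1) * Cmod x).
      rewrite Cmod_mult. pose proof (Cmod_ge_0 x). nra.
  - intros x Hx.
    assert (Hxz : x = z).
    { symmetry. apply (is_filter_lim_locally_unique (K:=R_AbsRing) (V:=C_R_NormedModule)). exact Hx. }
    subst x. intros eps. apply locally_C_of_AbsRing.
    eapply filter_imp; [| exact (H z (fun Q HQ => HQ) eps)]. intros y Hy.
    rewrite !norm_C_R. change (Cmod (P y - P z - (y - z) * l) <= eps * Cmod (y - z)) in Hy.
    change (Cmod (P y - P z - l * (y - z)) <= eps * Cmod (y - z)).
    replace (l * (y - z))%C with ((y - z) * l)%C by ring. exact Hy.
Qed.

Lemma is_derive_path_comp (P : C -> C) (g : R -> C) (t : R) (l v : C) :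
  is_derive_C P (g t) l -> is_derive_path g t v ->
  is_derive_path (fun s => P (g s)) t (l * v)%C.
Proof.
  intros HP Hg.
  pose proof (filterdiff_comp' (K:=R_AbsRing) (U:=R_NormedModule) (V:=C_R_NormedModule)
    (W:=C_R_NormedModule) g P t _ _ Hg (filterdiff_R_of_is_derive_C P (g t) l HP)) as H.
  eapply filterdiff_ext_lin. exact H.
  intros y. simpl. rewrite !scal_C_R. change (@eq C (l * (y * v))%C (y * (l * v))%C). ring.
Qed.

Lemma is_derive_path_pair (g : R -> C) (t a b : R) :
  is_derive (fun s => fst (g s)) t a -> is_derive (fun s => snd (g s)) t b ->
  is_derive_path g t (a, b).
Proof.
  intros [_ Ha] [_ Hb]. split.
  - apply is_linear_scal_l.
  - intros x Hx. assert (Hxt : x = t).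
    { symmetry. apply (is_filter_lim_locally_unique (K:=R_AbsRing) (V:=R_NormedModule)). exact Hx. }
    subst x. intros eps.
    assert (he : 0 < eps / 2) by (destruct eps; simpl; lra).
    specialize (Ha t Hx (mkposreal _ he)). specialize (Hb t Hx (mkposreal _ he)).
    generalize (filter_and _ _ Ha Hb). apply filter_imp. intros y [H1 H2].
    eapply Rle_trans. { rewrite norm_C_R. apply Cmod_le_Rabs_re_im. }
    simpl in H1, H2 |- *. unfold norm in H1, H2 |- *; simpl in H1, H2 |- *.
    unfold minus, plus, opp, scal in H1, H2 |- *; simpl in H1, H2 |- *.
    unfold prod_plus, prod_opp, prod_scal in *; simpl in *.
    unfold plus, opp, scal, mult, abs in *; simpl in *. lra.
Qed.

Lemma is_derive_path_continuous (g : R -> C) (t : R) (l : C) :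
  is_derive_path g t l -> continuous_path g t.
Proof. intros H. apply (ex_derive_continuous (K:=R_AbsRing) (V:=C_R_NormedModule)). exists l. exact H. Qed.

Lemma is_RInt_path_derive (P K : C -> C) (g dg : R -> C) (a b : R) :
  a <= b ->
  (forall t, a <= t <= b -> is_derive_path g t (dg t)) ->
  (forall t, a <= t <= b -> continuous_path dg t) ->
  (forall t, a <= t <= b -> is_derive_C P (g t) (K (g t))) ->
  (forall t, a <= t <= b -> continuous_C K (g t)) ->
  is_RInt (V:=C_R_CompleteNormedModule) (fun t => (K (g t) * dg t)%C) a b (P (g b) - P (g a))%C.
Proof.
  intros Hab Hg Hdg HP HK.
  apply (is_RInt_derive (V:=C_R_CompleteNormedModule) (fun t => P (g t)));
    intros t Ht; rewrite Rmin_left, Rmax_right in Ht by lra.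
  - apply is_derive_path_comp; [apply HP | apply Hg]; lra.
  - apply continuous_C_mult; [| apply Hdg; lra].
    apply (continuous_comp g K); [eapply is_derive_path_continuous, Hg | apply HK]; lra.
Qed.

Lemma is_RInt_C_mult (f : R -> C) (a b : R) (l c : C) :
  is_RInt (V:=C_R_NormedModule) f a b l ->
  is_RInt (V:=C_R_NormedModule) (fun t => (c * f t)%C) a b (c * l)%C.
Proof.
  intros H.
  assert (H1 := is_RInt_fct_extend_fst (U:=R_NormedModule) (V:=R_NormedModule) f a b l H).
  assert (H2 := is_RInt_fct_extend_snd (U:=R_NormedModule) (V:=R_NormedModule) f a b l H).
  apply (is_RInt_fct_extend_pair (U:=R_NormedModule) (V:=R_NormedModule)); simpl.
  - eapply is_RInt_ext. 2: apply (is_RInt_minus (V:=R_NormedModule)); apply (is_RInt_scal (V:=R_NormedModule)); [exact H1 | exact H2].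
    intros x _. simpl. unfold minus, plus, opp, scal, mult; simpl. unfold mult; simpl. ring.
  - eapply is_RInt_ext. 2: apply (is_RInt_plus (V:=R_NormedModule)); apply (is_RInt_scal (V:=R_NormedModule)); [exact H2 | exact H1].
    intros x _. simpl. unfold minus, plus, opp, scal, mult; simpl. unfold mult; simpl. ring.
Qed.

Lemma ex_RInt_C_continuous (f : R -> C) (a b : R) :
  a <= b -> (forall t, a <= t <= b -> continuous_path f t) ->
  ex_RInt (V:=C_R_CompleteNormedModule) f a b.
Proof.
  intros Hab H. apply ex_RInt_continuous. intros z Hz.
  rewrite Rmin_left, Rmax_right in Hz by lra. apply H; lra.
Qed.

Lemma is_RInt_C_Cmod_le (f : R -> C) (a b B : R) (l : C) :
  a <= b -> (forall t, a <= t <= b -> Cmod (f t) <= B) ->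
  is_RInt (V:=C_R_NormedModule) f a b l -> Cmod l <= (b - a) * B.
Proof.
  intros Hab HB H. rewrite <- norm_C_R.
  apply (norm_RInt_le_const (V:=C_R_NormedModule) f); auto.
  intros x Hx. rewrite norm_C_R. auto.
Qed.

Lemma path_increment_le (g dg : R -> C) (s t B : R) :
  s <= t ->
  (forall u, s <= u <= t -> is_derive_path g u (dg u)) ->
  (forall u, s <= u <= t -> continuous_path dg u) ->
  (forall u, s <= u <= t -> Cmod (dg u) <= B) ->
  Cmod (g t - g s)%C <= (t - s) * B.
Proof.
  intros Hst Hg Hdg HB. apply (is_RInt_C_Cmod_le dg s t B _ Hst HB).
  apply (is_RInt_derive (V:=C_R_CompleteNormedModule));
    intros x Hx; rewrite Rmin_left, Rmax_right in Hx by lra; [apply Hg | apply Hdg]; lra.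
Qed.

Definition cis (t : R) : C := (cos t, sin t).
Definition polar (r t : R) : C := (RtoC r * cis t)%C.

Lemma Cmod_cis (t : R) : Cmod (cis t) = 1.
Proof.
  unfold Cmod, cis; simpl. rewrite !Rmult_1_r.
  replace (cos t * cos t + sin t * sin t) with 1 by (rewrite <- (sin2_cos2 t); unfold Rsqr; ring).
  apply sqrt_1.
Qed.

Lemma cis_add_2PI (c : R) : cis (c + 2 * PI) = cis c.
Proof.
  unfold cis. rewrite cos_plus, sin_plus, cos_2PI, sin_2PI. apply injective_projections; simpl; ring.
Qed.

Lemma Cmod_polar (r t : R) : 0 <= r -> Cmod (polar r t) = r.
Proof. intros H. unfold polar. rewrite Cmod_mult, Cmod_R, Cmod_cis, Rabs_right by lra. ring. Qed.

Lemma polar_neq0 (r t : R) : 0 < r -> polar r t <> 0%C.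
Proof. intros Hr E. apply (f_equal Cmod) in E. rewrite Cmod_polar, Cmod_0 in E; lra. Qed.

Lemma polar_sub_neq0 (r t : R) (a : C) : Cmod a < r -> (polar r t - a)%C <> 0%C.
Proof.
  intros Ha E. apply (f_equal Cmod) in E. rewrite Cmod_0 in E.
  apply Cmod_sub_eq0, (f_equal Cmod) in E. pose proof (Cmod_ge_0 a). rewrite Cmod_polar in E; lra.
Qed.

Lemma Cmod_polar_sub_ge (r t : R) (a : C) : 0 <= r -> r - Cmod a <= Cmod (polar r t - a)%C.
Proof.
  intros Hr. rewrite <- (Cmod_polar r t) at 1 by exact Hr.
  assert (Cmod (polar r t) <= Cmod (polar r t - a)%C + Cmod a)
    by (replace (polar r t) with ((polar r t - a) + a)%C at 1 by ring; apply Cmod_triangle).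
  lra.
Qed.

Lemma is_derive_ray (t r : R) : is_derive_path (fun s => polar s t) r (cis t).
Proof.
  apply (is_derive_ext (fun s => (s * cos t, s * sin t) : C)).
  { intros s. unfold polar, cis. apply injective_projections; simpl; ring. }
  unfold cis. apply is_derive_path_pair; simpl; auto_derive; auto; ring.
Qed.

Lemma is_derive_arc (r t : R) : is_derive_path (fun s => polar r s) t (Ci * polar r t)%C.
Proof.
  apply (is_derive_ext (fun s => (r * cos s, r * sin s) : C)).
  { intros s. unfold polar, cis. apply injective_projections; simpl; ring. }
  replace (Ci * polar r t)%C with ((- (r * sin t)), r * cos t)
    by (unfold polar, cis, Ci; apply injective_projections; simpl; ring).
  apply is_derive_path_pair; simpl; auto_derive; auto; ring.
Qed.

Lemma continuous_ray (t r : R) : continuous_path (fun s => polar s t) r.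
Proof. eapply is_derive_path_continuous, is_derive_ray. Qed.

Lemma continuous_arc (r t : R) : continuous_path (fun s => polar r s) t.
Proof. eapply is_derive_path_continuous, is_derive_arc. Qed.

Lemma continuous_arc_derivative (r t : R) : continuous_path (fun s => Ci * polar r s)%C t.
Proof. apply continuous_C_mult; [apply continuous_const | apply continuous_arc]. Qed.

Lemma Cmod_cis_sub_le (t s : R) : Cmod (cis t - cis s)%C <= Rabs (t - s).
Proof.
  assert (Hcis : forall u, cis u = polar 1 u)
    by (intros u; unfold polar; rewrite Cmult_1_l; reflexivity).
  assert (Hmod : forall u, Cmod (Ci * polar 1 u)%C <= 1)
    by (intros u; rewrite Cmod_mult, Cmod_Ci, Cmod_polar; lra).
  rewrite !Hcis.
  destruct (Rle_dec s t) as [H|H].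
  - rewrite Rabs_right by lra. replace (t - s) with ((t - s) * 1) by ring.
    apply (path_increment_le (polar 1) (fun u => Ci * polar 1 u)%C); auto;
      intros; [apply is_derive_arc | apply continuous_arc_derivative].
  - rewrite Rabs_left by lra. replace (- (t - s)) with ((s - t) * 1) by ring.
    replace (polar 1 t - polar 1 s)%C with (- (polar 1 s - polar 1 t))%C by ring. rewrite Cmod_opp.
    apply (path_increment_le (polar 1) (fun u => Ci * polar 1 u)%C); auto; try lra;
      intros; [apply is_derive_arc | apply continuous_arc_derivative].
Qed.

Lemma Cmod_polar_sub_le (r t r0 t0 : R) : 0 <= r0 ->
  Cmod (polar r t - polar r0 t0)%C <= Rabs (r - r0) + r0 * Rabs (t - t0).
Proof.
  intros H0. unfold polar.
  replace (RtoC r * cis t - RtoC r0 * cis t0)%C with (RtoC (r - r0) * cis t + RtoC r0 * (cis t - cis t0))%C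
    by (apply injective_projections; simpl; ring).
  eapply Rle_trans. apply Cmod_triangle. rewrite !Cmod_mult, !Cmod_R, Cmod_cis.
  rewrite (Rabs_right r0) by lra. pose proof (Cmod_cis_sub_le t t0). nra.
Qed.

Lemma polar_exists (a : C) : a <> 0%C -> exists th, a = polar (Cmod a) th.
Proof.
  intros Ha. assert (Hm : 0 < Cmod a) by (apply Cmod_gt_0; auto).
  destruct a as [x y].
  assert (Hm2 : Cmod (x, y) * Cmod (x, y) = x * x + y * y).
  { unfold Cmod; simpl. rewrite !Rmult_1_r. apply sqrt_sqrt. nra. }
  set (m := Cmod (x, y)) in *. unfold polar, cis.
  assert (Hx : -1 <= x / m <= 1).
  { split; apply (Rmult_le_reg_r m); auto; unfold Rdiv;
    rewrite Rmult_assoc, Rinv_l, Rmult_1_r by lra; nra. }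
  assert (Hs : sqrt (1 - (x / m)²) = Rabs (y / m)).
  { rewrite <- sqrt_Rsqr_abs. f_equal. unfold Rsqr. field_simplify; try lra.
    replace (m ^ 2) with (x * x + y * y) by (rewrite <- Hm2; ring). field. nra. }
  destruct (Rle_dec 0 y) as [Hy|Hy].
  - exists (acos (x / m)). rewrite cos_acos, sin_acos, Hs by auto.
    rewrite Rabs_right by (apply Rle_ge, Rdiv_le_0_compat; lra).
    apply injective_projections; simpl; field; lra.
  - exists (- acos (x / m)). rewrite cos_neg, sin_neg, cos_acos, sin_acos, Hs by auto.
    rewrite Rabs_left by (unfold Rdiv; apply Rmult_neg_pos; [lra | apply Rinv_0_lt_compat; lra]).
    apply injective_projections; simpl; field; lra.
Qed.

Lemma polar_inj (r t m th : R) : 0 <= r -> 0 < m -> Rabs (t - th) <= PI ->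
  polar r t = polar m th -> r = m /\ t = th.
Proof.
  intros Hr Hm Ht E.
  assert (Hrm : r = m) by (apply (f_equal Cmod) in E; rewrite !Cmod_polar in E; lra).
  subst r. split; auto.
  unfold polar, cis in E. injection E. intros E2 E1.
  assert (Ec : cos t = cos th) by (apply (Rmult_eq_reg_l m); lra).
  assert (Es : sin t = sin th) by (apply (Rmult_eq_reg_l m); lra).
  assert (Hc : cos (t - th) = 1)
    by (rewrite cos_minus, Ec, Es, <- (sin2_cos2 th); unfold Rsqr; ring).
  apply Rabs_le_between in Ht.
  (* cos = 1 forces the angle to 0 on [-PI, PI] *)
  destruct (Rle_dec 0 (t - th)).
  - assert (t - th = 0) by (rewrite <- (acos_cos (t - th)) by lra; rewrite Hc; apply acos_1). lra.
  - assert (th - t = 0) by (rewrite <- (acos_cos (th - t)) by lra;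
      replace (th - t) with (- (t - th)) by ring; rewrite cos_neg, Hc; apply acos_1). lra.
Qed.

(** Integrals of [K(z) dz] along the sides of the polar rectangle
    [{polar r t | a1 <= r <= a2, b1 <= t <= b2}]; [boundary_int] runs around
    it counterclockwise. *)

Definition ray_integrand (K : C -> C) (t r : R) : C := (K (polar r t) * cis t)%C.
Definition arc_integrand (K : C -> C) (r t : R) : C := (K (polar r t) * (Ci * polar r t))%C.
Definition ray_int (K : C -> C) (r1 r2 t : R) : C := RInt_C (ray_integrand K t) r1 r2.
Definition arc_int (K : C -> C) (r t1 t2 : R) : C := RInt_C (arc_integrand K r) t1 t2.

Definition boundary_int (K : C -> C) (a1 a2 b1 b2 : R) : C :=
  (ray_int K a1 a2 b1 + arc_int K a2 b1 b2 - ray_int K a1 a2 b2 - arc_int K a1 b1 b2)%C.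

Definition continuous_on_polar (K : C -> C) (a1 a2 b1 b2 : R) : Prop :=
  forall r t, a1 <= r <= a2 -> b1 <= t <= b2 -> continuous_C K (polar r t).

Definition holomorphic_on_polar (K : C -> C) (a1 a2 b1 b2 : R) : Prop :=
  forall r t, a1 <= r <= a2 -> b1 <= t <= b2 -> ex_derive_C K (polar r t).

Lemma continuous_on_polar_sub K a1 a2 b1 b2 c1 c2 d1 d2 :
  continuous_on_polar K a1 a2 b1 b2 -> a1 <= c1 -> c2 <= a2 -> b1 <= d1 -> d2 <= b2 ->
  continuous_on_polar K c1 c2 d1 d2.
Proof. intros H ? ? ? ? r t Hr Ht. apply H; lra. Qed.

Lemma holomorphic_on_polar_continuous K a1 a2 b1 b2 :
  holomorphic_on_polar K a1 a2 b1 b2 -> continuous_on_polar K a1 a2 b1 b2.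
Proof. intros H r t Hr Ht. apply ex_derive_C_continuous, H; auto. Qed.

Section PolarRectangle.

Variables (K : C -> C) (a1 a2 b1 b2 : R).
Hypothesis HK : continuous_on_polar K a1 a2 b1 b2.

Lemma ex_RInt_ray t x y : b1 <= t <= b2 -> a1 <= x -> x <= y -> y <= a2 ->
  ex_RInt (V:=C_R_CompleteNormedModule) (ray_integrand K t) x y.
Proof.
  intros Ht Hx Hxy Hy. apply ex_RInt_C_continuous; auto. intros u Hu.
  apply continuous_C_mult; [| apply continuous_const].
  apply (continuous_comp (fun s => polar s t) K); [apply continuous_ray | apply HK; lra].
Qed.

Lemma ex_RInt_arc r x y : a1 <= r <= a2 -> b1 <= x -> x <= y -> y <= b2 ->
  ex_RInt (V:=C_R_CompleteNormedModule) (arc_integrand K r) x y.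
Proof.
  intros Hr Hx Hxy Hy. apply ex_RInt_C_continuous; auto. intros u Hu.
  apply continuous_C_mult; [| apply continuous_arc_derivative].
  apply (continuous_comp (polar r) K); [apply continuous_arc | apply HK; lra].
Qed.

Lemma boundary_int_split_ray m : a1 <= m <= a2 -> b1 <= b2 ->
  boundary_int K a1 a2 b1 b2 = (boundary_int K a1 m b1 b2 + boundary_int K m a2 b1 b2)%C.
Proof.
  intros Hm Hb. unfold boundary_int, ray_int.
  rewrite <- (RInt_Chasles (V:=C_R_CompleteNormedModule) (ray_integrand K b1) a1 m a2),
          <- (RInt_Chasles (V:=C_R_CompleteNormedModule) (ray_integrand K b2) a1 m a2)
    by (apply ex_RInt_ray; lra).
  change plus with Cplus. ring.
Qed.

Lemma boundary_int_split_arc m : a1 <= a2 -> b1 <= m <= b2 ->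
  boundary_int K a1 a2 b1 b2 = (boundary_int K a1 a2 b1 m + boundary_int K a1 a2 m b2)%C.
Proof.
  intros Ha Hm. unfold boundary_int, arc_int.
  rewrite <- (RInt_Chasles (V:=C_R_CompleteNormedModule) (arc_integrand K a1) b1 m b2),
          <- (RInt_Chasles (V:=C_R_CompleteNormedModule) (arc_integrand K a2) b1 m b2)
    by (apply ex_RInt_arc; lra).
  change plus with Cplus. ring.
Qed.

Lemma Cmod_boundary_int_le B : 0 <= a1 -> a1 <= a2 -> b1 <= b2 ->
  (forall r t, a1 <= r <= a2 -> b1 <= t <= b2 -> Cmod (K (polar r t)) <= B) ->
  Cmod (boundary_int K a1 a2 b1 b2) <= 2 * ((a2 - a1) + a2 * (b2 - b1)) * B.
Proof.
  intros H0 Ha Hb HB.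
  assert (Hray : forall t, b1 <= t <= b2 -> Cmod (ray_int K a1 a2 t) <= (a2 - a1) * B).
  { intros t Ht. eapply is_RInt_C_Cmod_le; [exact Ha | | apply (RInt_correct (V:=C_R_CompleteNormedModule)), ex_RInt_ray; lra].
    intros r Hr. unfold ray_integrand. rewrite Cmod_mult, Cmod_cis, Rmult_1_r. apply HB; lra. }
  assert (Harc : forall r, a1 <= r <= a2 -> Cmod (arc_int K r b1 b2) <= (b2 - b1) * (a2 * B)).
  { intros r Hr. eapply is_RInt_C_Cmod_le; [exact Hb | | apply (RInt_correct (V:=C_R_CompleteNormedModule)), ex_RInt_arc; lra].
    intros t Ht. unfold arc_integrand. rewrite !Cmod_mult, Cmod_Ci, Cmod_polar by lra.
    assert (Cmod (K (polar r t)) <= B) by (apply HB; lra). pose proof (Cmod_ge_0 (K (polar r t))).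
    rewrite Rmult_1_l, Rmult_comm. apply Rmult_le_compat; lra. }
  pose proof (Hray b1 ltac:(lra)). pose proof (Hray b2 ltac:(lra)).
  pose proof (Harc a1 ltac:(lra)). pose proof (Harc a2 ltac:(lra)).
  unfold boundary_int.
  set (x := ray_int K a1 a2 b1) in *. set (y := arc_int K a2 b1 b2) in *.
  set (z := ray_int K a1 a2 b2) in *. set (w := arc_int K a1 b1 b2) in *.
  pose proof (Cmod_triangle (x + y - z) (- w)). pose proof (Cmod_triangle (x + y) (- z)).
  pose proof (Cmod_triangle x y). unfold Cminus in *. rewrite !Cmod_opp in *. nra.
Qed.

End PolarRectangle.

Lemma boundary_int_quarters K a1 a2 b1 b2 :
  continuous_on_polar K a1 a2 b1 b2 -> a1 <= a2 -> b1 <= b2 ->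
  let ma := (a1 + a2) / 2 in let mb := (b1 + b2) / 2 in
  boundary_int K a1 a2 b1 b2 = (boundary_int K a1 ma b1 mb + boundary_int K ma a2 b1 mb
                                + boundary_int K a1 ma mb b2 + boundary_int K ma a2 mb b2)%C.
Proof.
  intros HK Ha Hb ma mb.
  assert (Hma : a1 <= ma <= a2) by (unfold ma; lra). assert (Hmb : b1 <= mb <= b2) by (unfold mb; lra).
  rewrite (boundary_int_split_arc K a1 a2 b1 b2 HK mb) by lra.
  rewrite (boundary_int_split_ray K a1 a2 b1 mb) with (m := ma),
          (boundary_int_split_ray K a1 a2 mb b2) with (m := ma)
    by (try (eapply continuous_on_polar_sub; [exact HK | lra ..]); lra).
  ring.
Qed.

Lemma ray_int_primitive (P K : C -> C) (t x y : R) : x <= y ->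
  (forall r, x <= r <= y -> is_derive_C P (polar r t) (K (polar r t))) ->
  (forall r, x <= r <= y -> continuous_C K (polar r t)) ->
  ray_int K x y t = (P (polar y t) - P (polar x t))%C.
Proof.
  intros Hxy HP HK. unfold ray_int. apply (is_RInt_unique (V:=C_R_CompleteNormedModule)).
  apply (is_RInt_path_derive P K (fun r => polar r t) (fun _ => cis t)); auto.
  - intros; apply is_derive_ray.
  - intros; apply continuous_const.
Qed.

Lemma arc_int_primitive (P K : C -> C) (r x y : R) : x <= y ->
  (forall t, x <= t <= y -> is_derive_C P (polar r t) (K (polar r t))) ->
  (forall t, x <= t <= y -> continuous_C K (polar r t)) ->
  arc_int K r x y = (P (polar r y) - P (polar r x))%C.
Proof.
  intros Hxy HP HK. unfold arc_int. apply (is_RInt_unique (V:=C_R_CompleteNormedModule)).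
  apply (is_RInt_path_derive P K (polar r) (fun t => Ci * polar r t)%C); auto.
  - intros; apply is_derive_arc.
  - intros; apply continuous_arc_derivative.
Qed.

Lemma boundary_int_primitive (P K : C -> C) a1 a2 b1 b2 : a1 <= a2 -> b1 <= b2 ->
  (forall z, is_derive_C P z (K z)) -> (forall z, continuous_C K z) ->
  boundary_int K a1 a2 b1 b2 = 0%C.
Proof.
  intros Ha Hb HP HK. unfold boundary_int.
  rewrite (ray_int_primitive P K b1 a1 a2), (ray_int_primitive P K b2 a1 a2),
          (arc_int_primitive P K a1 b1 b2), (arc_int_primitive P K a2 b1 b2); auto.
  ring.
Qed.

Lemma boundary_int_minus K G a1 a2 b1 b2 : a1 <= a2 -> b1 <= b2 ->
  continuous_on_polar K a1 a2 b1 b2 -> continuous_on_polar G a1 a2 b1 b2 ->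
  boundary_int (fun z => K z - G z)%C a1 a2 b1 b2
  = (boundary_int K a1 a2 b1 b2 - boundary_int G a1 a2 b1 b2)%C.
Proof.
  intros Ha Hb HK HG. unfold boundary_int, ray_int, arc_int.
  assert (Eray : forall t, ray_integrand (fun z => K z - G z)%C t
                           = fun r => (ray_integrand K t r - ray_integrand G t r)%C)
    by (intros t; apply functional_extensionality; intros r; unfold ray_integrand; ring).
  assert (Earc : forall r, arc_integrand (fun z => K z - G z)%C r
                           = fun t => (arc_integrand K r t - arc_integrand G r t)%C)
    by (intros r; apply functional_extensionality; intros t; unfold arc_integrand; ring).
  rewrite !Eray, !Earc.
  rewrite (RInt_minus (V:=C_R_CompleteNormedModule) (ray_integrand K b1) (ray_integrand G b1))
    by (apply ex_RInt_ray with (a1 := a1) (a2 := a2) (b1 := b1) (b2 := b2); auto; lra).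
  rewrite (RInt_minus (V:=C_R_CompleteNormedModule) (ray_integrand K b2) (ray_integrand G b2))
    by (apply ex_RInt_ray with (a1 := a1) (a2 := a2) (b1 := b1) (b2 := b2); auto; lra).
  rewrite (RInt_minus (V:=C_R_CompleteNormedModule) (arc_integrand K a1) (arc_integrand G a1))
    by (apply ex_RInt_arc with (a1 := a1) (a2 := a2) (b1 := b1) (b2 := b2); auto; lra).
  rewrite (RInt_minus (V:=C_R_CompleteNormedModule) (arc_integrand K a2) (arc_integrand G a2))
    by (apply ex_RInt_arc with (a1 := a1) (a2 := a2) (b1 := b1) (b2 := b2); auto; lra).
  change minus with Cminus. ring.
Qed.

Record prect := PRect { ra1 : R; ra2 : R; rb1 : R; rb2 : R }.

Definition prect_int (K : C -> C) (Q : prect) : C := boundary_int K (ra1 Q) (ra2 Q) (rb1 Q) (rb2 Q).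

Definition quarter1 Q := PRect (ra1 Q) ((ra1 Q + ra2 Q) / 2) (rb1 Q) ((rb1 Q + rb2 Q) / 2).
Definition quarter2 Q := PRect ((ra1 Q + ra2 Q) / 2) (ra2 Q) (rb1 Q) ((rb1 Q + rb2 Q) / 2).
Definition quarter3 Q := PRect (ra1 Q) ((ra1 Q + ra2 Q) / 2) ((rb1 Q + rb2 Q) / 2) (rb2 Q).
Definition quarter4 Q := PRect ((ra1 Q + ra2 Q) / 2) (ra2 Q) ((rb1 Q + rb2 Q) / 2) (rb2 Q).

(** A quarter carrying at least a fourth of the boundary integral (one exists
    by [boundary_int_quarters]). *)
Definition bisect (K : C -> C) (Q : prect) : prect :=
  if Rle_dec (Cmod (prect_int K Q) / 4) (Cmod (prect_int K (quarter1 Q))) then quarter1 Q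
  else if Rle_dec (Cmod (prect_int K Q) / 4) (Cmod (prect_int K (quarter2 Q))) then quarter2 Q
  else if Rle_dec (Cmod (prect_int K Q) / 4) (Cmod (prect_int K (quarter3 Q))) then quarter3 Q
  else quarter4 Q.

Fixpoint bisect_iter (K : C -> C) (Q : prect) (n : nat) : prect :=
  match n with O => Q | S m => bisect K (bisect_iter K Q m) end.

Definition half_subrect (Q S : prect) : Prop :=
  ra1 Q <= ra1 S /\ ra2 S <= ra2 Q /\ rb1 Q <= rb1 S /\ rb2 S <= rb2 Q /\
  ra2 S - ra1 S = (ra2 Q - ra1 Q) / 2 /\ rb2 S - rb1 S = (rb2 Q - rb1 Q) / 2.

Lemma bisect_half_subrect K Q : ra1 Q <= ra2 Q -> rb1 Q <= rb2 Q -> half_subrect Q (bisect K Q).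
Proof.
  intros Ha Hb. unfold bisect.
  destruct (Rle_dec _ _); [|destruct (Rle_dec _ _); [|destruct (Rle_dec _ _)]];
  unfold half_subrect, quarter1, quarter2, quarter3, quarter4; simpl; lra.
Qed.

Lemma Cmod_prect_int_bisect K Q : continuous_on_polar K (ra1 Q) (ra2 Q) (rb1 Q) (rb2 Q) ->
  ra1 Q <= ra2 Q -> rb1 Q <= rb2 Q ->
  Cmod (prect_int K Q) / 4 <= Cmod (prect_int K (bisect K Q)).
Proof.
  intros HK Ha Hb. unfold bisect.
  destruct (Rle_dec _ _) as [H1|H1]; auto.
  destruct (Rle_dec _ _) as [H2|H2]; auto.
  destruct (Rle_dec _ _) as [H3|H3]; auto.
  assert (E := boundary_int_quarters K _ _ _ _ HK Ha Hb). simpl in E.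
  unfold prect_int, quarter1, quarter2, quarter3, quarter4 in *; simpl in *.
  rewrite E in *.
  set (j1 := boundary_int K (ra1 Q) ((ra1 Q + ra2 Q) / 2) (rb1 Q) ((rb1 Q + rb2 Q) / 2)) in *.
  set (j2 := boundary_int K ((ra1 Q + ra2 Q) / 2) (ra2 Q) (rb1 Q) ((rb1 Q + rb2 Q) / 2)) in *.
  set (j3 := boundary_int K (ra1 Q) ((ra1 Q + ra2 Q) / 2) ((rb1 Q + rb2 Q) / 2) (rb2 Q)) in *.
  set (j4 := boundary_int K ((ra1 Q + ra2 Q) / 2) (ra2 Q) ((rb1 Q + rb2 Q) / 2) (rb2 Q)) in *.
  pose proof (Cmod_triangle (j1 + j2 + j3) j4). pose proof (Cmod_triangle (j1 + j2) j3).
  pose proof (Cmod_triangle j1 j2). lra.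
Qed.

Lemma bisect_iter_spec K Q n : continuous_on_polar K (ra1 Q) (ra2 Q) (rb1 Q) (rb2 Q) ->
  ra1 Q <= ra2 Q -> rb1 Q <= rb2 Q ->
  let S := bisect_iter K Q n in
  ra1 Q <= ra1 S /\ ra2 S <= ra2 Q /\ rb1 Q <= rb1 S /\ rb2 S <= rb2 Q /\
  ra2 S - ra1 S = (ra2 Q - ra1 Q) / 2 ^ n /\ rb2 S - rb1 S = (rb2 Q - rb1 Q) / 2 ^ n /\
  Cmod (prect_int K Q) / (2 ^ n * 2 ^ n) <= Cmod (prect_int K S).
Proof.
  intros HK Ha Hb. induction n as [|n IH]; simpl.
  - unfold Rdiv. rewrite Rmult_1_r, Rinv_1, !Rmult_1_r. lra.
  - destruct IH as (I1 & I2 & I3 & I4 & I5 & I6 & I7).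
    assert (P2 : 0 < 2 ^ n) by (apply pow_lt; lra).
    assert (0 <= (ra2 Q - ra1 Q) / 2 ^ n) by (apply Rdiv_le_0_compat; lra).
    assert (0 <= (rb2 Q - rb1 Q) / 2 ^ n) by (apply Rdiv_le_0_compat; lra).
    destruct (bisect_half_subrect K (bisect_iter K Q n)) as (S1 & S2 & S3 & S4 & S5 & S6); try lra.
    assert (HB := Cmod_prect_int_bisect K (bisect_iter K Q n)
                    ltac:(eapply continuous_on_polar_sub; [exact HK | lra ..]) ltac:(lra) ltac:(lra)).
    repeat split; try lra.
    + rewrite S5, I5. field. lra.
    + rewrite S6, I6. field. lra.
    + eapply Rle_trans; [| exact HB].
      replace (Cmod (prect_int K Q) / (2 * 2 ^ n * (2 * 2 ^ n)))
        with ((Cmod (prect_int K Q) / (2 ^ n * 2 ^ n)) / 4) by (field; lra).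
      lra.
Qed.

Lemma bisect_iter_mono K Q n k : continuous_on_polar K (ra1 Q) (ra2 Q) (rb1 Q) (rb2 Q) ->
  ra1 Q <= ra2 Q -> rb1 Q <= rb2 Q ->
  ra1 (bisect_iter K Q n) <= ra1 (bisect_iter K Q (n + k)) /\
  ra2 (bisect_iter K Q (n + k)) <= ra2 (bisect_iter K Q n) /\
  rb1 (bisect_iter K Q n) <= rb1 (bisect_iter K Q (n + k)) /\
  rb2 (bisect_iter K Q (n + k)) <= rb2 (bisect_iter K Q n).
Proof.
  intros HK Ha Hb. induction k as [|k IH].
  - rewrite Nat.add_0_r. lra.
  - rewrite Nat.add_succ_r. simpl.
    destruct (bisect_iter_spec K Q (n + k) HK Ha Hb) as (_ & _ & _ & _ & W1 & W2 & _).
    assert (0 < 2 ^ (n + k)) by (apply pow_lt; lra).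
    assert (0 <= (ra2 Q - ra1 Q) / 2 ^ (n + k)) by (apply Rdiv_le_0_compat; lra).
    assert (0 <= (rb2 Q - rb1 Q) / 2 ^ (n + k)) by (apply Rdiv_le_0_compat; lra).
    destruct (bisect_half_subrect K (bisect_iter K Q (n + k))) as (S1 & S2 & S3 & S4 & _ & _); lra.
Qed.

Lemma nested_intervals (u v : nat -> R) :
  (forall n m, u m <= v n) -> exists x, forall n, u n <= x <= v n.
Proof.
  intros H.
  assert (Hb : bound (fun x => exists n, x = u n)) by (exists (v O); intros x [n ->]; apply H).
  destruct (completeness _ Hb (ex_intro _ (u O) (ex_intro _ O eq_refl))) as [m [Hub Hlub]].
  exists m. intros n. split.
  - apply Hub. exists n. reflexivity.
  - apply Hlub. intros x [k ->]. apply H.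
Qed.

Lemma bisect_iter_common_point K Q : continuous_on_polar K (ra1 Q) (ra2 Q) (rb1 Q) (rb2 Q) ->
  ra1 Q <= ra2 Q -> rb1 Q <= rb2 Q ->
  exists rs ts, forall n, ra1 (bisect_iter K Q n) <= rs <= ra2 (bisect_iter K Q n) /\
                          rb1 (bisect_iter K Q n) <= ts <= rb2 (bisect_iter K Q n).
Proof.
  intros HK Ha Hb.
  assert (Hord : forall n m,
    ra1 (bisect_iter K Q m) <= ra2 (bisect_iter K Q n) /\ rb1 (bisect_iter K Q m) <= rb2 (bisect_iter K Q n)).
  { intros n m.
    destruct (bisect_iter_mono K Q m n HK Ha Hb) as (N1 & _ & N3 & _).
    destruct (bisect_iter_mono K Q n m HK Ha Hb) as (_ & N2 & _ & N4).
    destruct (bisect_iter_spec K Q (m + n) HK Ha Hb) as (_ & _ & _ & _ & W1 & W2 & _).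
    rewrite Nat.add_comm in N2, N4.
    assert (0 < 2 ^ (m + n)) by (apply pow_lt; lra).
    assert (0 <= (ra2 Q - ra1 Q) / 2 ^ (m + n)) by (apply Rdiv_le_0_compat; lra).
    assert (0 <= (rb2 Q - rb1 Q) / 2 ^ (m + n)) by (apply Rdiv_le_0_compat; lra).
    lra. }
  destruct (nested_intervals (fun n => ra1 (bisect_iter K Q n)) (fun n => ra2 (bisect_iter K Q n)))
    as [rs Hrs]; [apply Hord |].
  destruct (nested_intervals (fun n => rb1 (bisect_iter K Q n)) (fun n => rb2 (bisect_iter K Q n)))
    as [ts Hts]; [apply Hord |].
  exists rs, ts. auto.
Qed.

Lemma exists_div_pow2_lt (d delta : R) : 0 < delta -> exists n, d / 2 ^ n < delta.
Proof.
  intros Hd. destruct (Rle_or_lt d 0) as [Hd0 | Hd0].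
  { exists O. simpl. lra. }
  destruct (pow_lt_1_zero (/ 2) ltac:(rewrite Rabs_right; lra) (delta / d)
             ltac:(apply Rdiv_lt_0_compat; lra)) as [N HN].
  exists N. specialize (HN N (Nat.le_refl N)).
  rewrite Rabs_right in HN by (apply Rle_ge, pow_le; lra).
  rewrite pow_inv in HN. unfold Rdiv.
  apply (Rmult_lt_compat_l d) in HN; [| lra]. replace (d * (delta / d)) with delta in HN by (field; lra).
  exact HN.
Qed.

(** Near a point [zs] where [K] is differentiable, [K] differs from an affine
    map, whose boundary integral vanishes, by [eps] times the distance. *)
Lemma Cmod_boundary_int_near_le K zs L eps d a1 a2 b1 b2 :
  0 <= a1 -> a1 <= a2 -> b1 <= b2 -> continuous_on_polar K a1 a2 b1 b2 ->
  (forall r t, a1 <= r <= a2 -> b1 <= t <= b2 ->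
     Cmod (K (polar r t) - K zs - (polar r t - zs) * L)%C <= eps * d) ->
  Cmod (boundary_int K a1 a2 b1 b2) <= 2 * ((a2 - a1) + a2 * (b2 - b1)) * (eps * d).
Proof.
  intros H0 Ha Hb HK Hnear.
  set (Aff := fun w => (K zs + L * (w - zs))%C).
  assert (HAff : continuous_on_polar Aff a1 a2 b1 b2) by (intros r t _ _; apply continuous_C_affine).
  assert (E : boundary_int K a1 a2 b1 b2 = boundary_int (fun w => K w - Aff w)%C a1 a2 b1 b2).
  { rewrite boundary_int_minus by auto.
    rewrite (boundary_int_primitive (fun w => (K zs - L * zs) * w + (L / 2) * (w * w))%C Aff) by
      (auto; try (intros; apply continuous_C_affine);
       intros z; replace (Aff z) with ((K zs - L * zs) + (L / 2) * (2 * z))%C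
         by (unfold Aff; field); apply is_derive_C_quadratic).
    ring. }
  rewrite E. apply Cmod_boundary_int_le; auto.
  - intros r t Hr Ht. apply (continuous_minus (K:=C_AbsRing) (V:=C_NormedModule)); [apply HK | apply HAff]; auto.
  - intros r t Hr Ht. unfold Aff.
    replace (K (polar r t) - (K zs + L * (polar r t - zs)))%C
      with (K (polar r t) - K zs - (polar r t - zs) * L)%C by ring.
    auto.
Qed.

Lemma Cmod_boundary_int_around_le K rs ts L eps a1 a2 b1 b2 :
  0 <= a1 -> a1 <= rs <= a2 -> b1 <= ts <= b2 -> continuous_on_polar K a1 a2 b1 b2 -> 0 <= eps ->
  let d := (a2 - a1) + a2 * (b2 - b1) in
  (forall z, Cmod (z - polar rs ts)%C <= d ->
     Cmod (K z - K (polar rs ts) - (z - polar rs ts) * L)%C <= eps * Cmod (z - polar rs ts)%C) ->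
  Cmod (boundary_int K a1 a2 b1 b2) <= 2 * eps * d * d.
Proof.
  intros H0 Hr Ht HK Heps d Hnear.
  assert (Hd : 0 <= d) by (unfold d; nra).
  replace (2 * eps * d * d) with (2 * d * (eps * d)) by ring.
  apply (Cmod_boundary_int_near_le K (polar rs ts) L eps d); auto; try lra.
  intros r t Hr' Ht'.
  assert (Hdist : Cmod (polar r t - polar rs ts)%C <= d).
  { eapply Rle_trans; [apply Cmod_polar_sub_le; lra |].
    assert (Rabs (r - rs) <= a2 - a1) by (apply Rabs_le; lra).
    assert (Rabs (t - ts) <= b2 - b1) by (apply Rabs_le; lra).
    assert (rs * Rabs (t - ts) <= a2 * (b2 - b1)) by (apply Rmult_le_compat; try lra; apply Rabs_pos).
    unfold d. lra. }
  eapply Rle_trans; [apply Hnear, Hdist |]. apply Rmult_le_compat_l; lra.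
Qed.

Theorem goursat_polar K a1 a2 b1 b2 : 0 <= a1 -> a1 <= a2 -> b1 <= b2 ->
  holomorphic_on_polar K a1 a2 b1 b2 -> boundary_int K a1 a2 b1 b2 = 0%C.
Proof.
  intros H0 Ha Hb HH.
  set (Q := PRect a1 a2 b1 b2).
  assert (HK : continuous_on_polar K (ra1 Q) (ra2 Q) (rb1 Q) (rb2 Q))
    by (apply holomorphic_on_polar_continuous; exact HH).
  change (prect_int K Q = 0%C).
  destruct (Req_dec (Cmod (prect_int K Q)) 0) as [HJ|HJ]; [apply Cmod_eq_0, HJ | exfalso].
  set (J0 := Cmod (prect_int K Q)).
  assert (HJ0 : 0 < J0) by (pose proof (Cmod_ge_0 (prect_int K Q)); unfold J0; lra).
  destruct (bisect_iter_common_point K Q HK Ha Hb) as (rs & ts & Hst).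
  destruct (Hst O) as [Hrs0 Hts0]. simpl in Hrs0, Hts0.
  set (d0 := (a2 - a1) + a2 * (b2 - b1)).
  assert (Hd0 : 0 <= d0) by (unfold d0; nra).
  set (eps := J0 / (4 * (d0 * d0 + 1))).
  assert (Heps : 0 < eps) by (unfold eps; apply Rdiv_lt_0_compat; nra).
  destruct (HH rs ts ltac:(lra) ltac:(lra)) as [L [_ Hdiff]].
  destruct (Hdiff (polar rs ts) (fun P HP => HP) (mkposreal eps Heps)) as [delta Hdelta]. simpl in Hdelta.
  destruct (exists_div_pow2_lt d0 delta (cond_pos delta)) as [n Hn].
  set (Sn := bisect_iter K Q n).
  destruct (bisect_iter_spec K Q n HK Ha Hb) as (P1 & P2 & P3 & P4 & P5 & P6 & P7).
  fold Sn in P1, P2, P3, P4, P5, P6, P7. simpl in P1, P2, P3, P4, P5, P6.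
  destruct (Hst n) as [Hrn Htn]. fold Sn in Hrn, Htn.
  assert (Hpow : 0 < 2 ^ n) by (apply pow_lt; lra).
  set (dn := (ra2 Sn - ra1 Sn) + ra2 Sn * (rb2 Sn - rb1 Sn)).
  assert (Hdn : 0 <= dn <= d0 / 2 ^ n).
  { unfold dn. split; [apply Rplus_le_le_0_compat; [| apply Rmult_le_pos]; lra |]. replace (d0 / 2 ^ n) with ((ra2 Sn - ra1 Sn) + a2 * (rb2 Sn - rb1 Sn))
      by (unfold d0; rewrite P5, P6; field; lra).
    apply Rplus_le_compat_l, Rmult_le_compat_r; lra. }
  assert (Hbound : Cmod (prect_int K Sn) <= 2 * eps * dn * dn).
  { apply (Cmod_boundary_int_around_le K rs ts L eps (ra1 Sn) (ra2 Sn) (rb1 Sn) (rb2 Sn)); try lra.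
    - eapply continuous_on_polar_sub; [exact HK | simpl; lra ..].
    - intros z Hz. apply (Hdelta z). change (Cmod (z - polar rs ts)%C < delta). fold dn in Hz. lra. }
  (* J0 / 4^n <= |J(S_n)| <= 2 eps dn^2 <= 2 eps d0^2 / 4^n, and 2 eps d0^2 < J0 *)
  assert (Hfin : J0 <= 2 * eps * (d0 * d0)).
  { apply (Rmult_le_reg_r (/ (2 ^ n * 2 ^ n))); [apply Rinv_0_lt_compat; nra |].
    assert (dn * dn <= (d0 / 2 ^ n) * (d0 / 2 ^ n)) by (apply Rmult_le_compat; lra).
    replace (2 * eps * (d0 * d0) * / (2 ^ n * 2 ^ n)) with (2 * eps * ((d0 / 2 ^ n) * (d0 / 2 ^ n)))
      by (field; lra).
    replace (2 * eps * dn * dn) with (2 * eps * (dn * dn)) in Hbound by ring.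
    assert (2 * eps * (dn * dn) <= 2 * eps * ((d0 / 2 ^ n) * (d0 / 2 ^ n)))
      by (apply Rmult_le_compat_l; lra).
    unfold J0. unfold Rdiv in P7. lra. }
  assert (2 * eps * (d0 * d0) < J0).
  { unfold eps. replace (2 * (J0 / (4 * (d0 * d0 + 1))) * (d0 * d0))
      with (J0 * (d0 * d0 / (2 * (d0 * d0 + 1)))) by (field; nra).
    assert (d0 * d0 / (2 * (d0 * d0 + 1)) < 1)
      by (apply (Rmult_lt_reg_r (2 * (d0 * d0 + 1))); [nra | unfold Rdiv; rewrite Rmult_assoc, Rinv_l; nra]).
    nra. }
  lra.
Qed.

Lemma Rle_0_of_le_mul_small (x c h0 : R) : 0 < h0 ->
  (forall h, 0 < h < h0 -> x <= c * h) -> x <= 0.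
Proof.
  intros Hh0 H. destruct (Rle_or_lt x 0) as [Hx|Hx]; [exact Hx | exfalso].
  set (h := Rmin (h0 / 2) (x / (2 * (Rabs c + 1)))).
  pose proof (Rabs_pos c). pose proof (Rle_abs c).
  assert (Hh : 0 < h) by (apply Rmin_pos; [lra | apply Rdiv_lt_0_compat; lra]).
  assert (Hh1 : h <= h0 / 2) by apply Rmin_l.
  assert (Hh2 : h <= x / (2 * (Rabs c + 1))) by apply Rmin_r.
  specialize (H h ltac:(lra)).
  assert (h * (2 * (Rabs c + 1)) <= x)
    by (apply (Rmult_le_compat_r (2 * (Rabs c + 1))) in Hh2; [| lra];
        replace (x / (2 * (Rabs c + 1)) * (2 * (Rabs c + 1))) with x in Hh2 by (field; lra); exact Hh2).
  nra.
Qed.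

Section ExceptionalPoint.

Variables (K : C -> C) (a1 a2 b1 b2 r0 t0 : R).
Hypothesis Ha1 : 0 <= a1.
Hypothesis HK : continuous_on_polar K a1 a2 b1 b2.
Hypothesis HH : forall r t, a1 <= r <= a2 -> b1 <= t <= b2 -> (r <> r0 \/ t <> t0) ->
  ex_derive_C K (polar r t).

Lemma boundary_int_localize h : a1 <= r0 - h -> r0 + h <= a2 -> b1 <= t0 - h -> t0 + h <= b2 -> 0 < h ->
  boundary_int K a1 a2 b1 b2 = boundary_int K (r0 - h) (r0 + h) (t0 - h) (t0 + h).
Proof.
  intros Hra Hrb Hta Htb Hh.
  assert (Sub : forall c1 c2 d1 d2, a1 <= c1 -> c2 <= a2 -> b1 <= d1 -> d2 <= b2 ->
                  continuous_on_polar K c1 c2 d1 d2)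
    by (intros; eapply continuous_on_polar_sub; [exact HK | lra ..]).
  (* the pieces not containing [polar r0 t0] contribute nothing, by Goursat *)
  assert (Zero : forall c1 c2 d1 d2, a1 <= c1 -> c1 <= c2 -> c2 <= a2 -> b1 <= d1 -> d1 <= d2 -> d2 <= b2 ->
                   (c2 < r0 \/ r0 < c1 \/ d2 < t0 \/ t0 < d1) -> boundary_int K c1 c2 d1 d2 = 0%C).
  { intros c1 c2 d1 d2 ? ? ? ? ? ? Hout. apply goursat_polar; try lra.
    intros r t Hr Ht. apply HH; [lra | lra |].
    destruct Hout as [?|[?|[?|?]]]; [left|left|right|right]; lra. }
  rewrite (boundary_int_split_ray K a1 a2 b1 b2) with (m := r0 - h) by (try apply Sub; lra).
  rewrite (boundary_int_split_ray K (r0 - h) a2 b1 b2) with (m := r0 + h) by (try apply Sub; lra).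
  rewrite (boundary_int_split_arc K (r0 - h) (r0 + h) b1 b2) with (m := t0 - h) by (try apply Sub; lra).
  rewrite (boundary_int_split_arc K (r0 - h) (r0 + h) (t0 - h) b2) with (m := t0 + h) by (try apply Sub; lra).
  rewrite (Zero a1 (r0 - h) b1 b2), (Zero (r0 + h) a2 b1 b2),
          (Zero (r0 - h) (r0 + h) b1 (t0 - h)), (Zero (r0 - h) (r0 + h) (t0 + h) b2) by lra.
  ring.
Qed.

Lemma goursat_polar_except : a1 < r0 < a2 -> b1 < t0 < b2 -> boundary_int K a1 a2 b1 b2 = 0%C.
Proof.
  intros Hr0 Ht0. set (z0 := polar r0 t0).
  destruct (continuous_C_eps K z0 (HK r0 t0 ltac:(lra) ltac:(lra)) 1 ltac:(lra)) as [d [Hd Hcont]].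
  set (B := Cmod (K z0) + 1).
  assert (HB : 0 < B) by (unfold B; pose proof (Cmod_ge_0 (K z0)); lra).
  apply Cmod_eq_0, Rle_antisym; [| apply Cmod_ge_0].
  set (h0 := Rmin (Rmin (Rmin (r0 - a1) (a2 - r0)) (Rmin (t0 - b1) (b2 - t0))) (Rmin 1 (d / (1 + r0)))).
  assert (Hh0 : 0 < h0) by (unfold h0; repeat apply Rmin_pos; try lra; apply Rdiv_lt_0_compat; lra).
  apply (Rle_0_of_le_mul_small _ (4 * B * (2 + r0)) h0 Hh0).
  intros h Hh.
  assert (h <= r0 - a1 /\ h <= a2 - r0 /\ h <= t0 - b1 /\ h <= b2 - t0 /\ h <= 1 /\ h < d / (1 + r0))
    as (M1 & M2 & M3 & M4 & M5 & M6).
  { unfold h0 in Hh.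
    pose proof (Rmin_l (Rmin (Rmin (r0 - a1) (a2 - r0)) (Rmin (t0 - b1) (b2 - t0))) (Rmin 1 (d / (1 + r0)))).
    pose proof (Rmin_r (Rmin (Rmin (r0 - a1) (a2 - r0)) (Rmin (t0 - b1) (b2 - t0))) (Rmin 1 (d / (1 + r0)))).
    pose proof (Rmin_l (Rmin (r0 - a1) (a2 - r0)) (Rmin (t0 - b1) (b2 - t0))).
    pose proof (Rmin_r (Rmin (r0 - a1) (a2 - r0)) (Rmin (t0 - b1) (b2 - t0))).
    pose proof (Rmin_l (r0 - a1) (a2 - r0)). pose proof (Rmin_r (r0 - a1) (a2 - r0)).
    pose proof (Rmin_l (t0 - b1) (b2 - t0)). pose proof (Rmin_r (t0 - b1) (b2 - t0)).
    pose proof (Rmin_l 1 (d / (1 + r0))). pose proof (Rmin_r 1 (d / (1 + r0))). lra. }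
  assert (Hhd : h * (1 + r0) < d)
    by (apply (Rmult_lt_compat_r (1 + r0)) in M6; [| lra];
        replace (d / (1 + r0) * (1 + r0)) with d in M6 by (field; lra); exact M6).
  rewrite (boundary_int_localize h) by lra.
  eapply Rle_trans; [apply (Cmod_boundary_int_le K (r0 - h) (r0 + h) (t0 - h) (t0 + h)) with (B := B); try lra |].
  - eapply continuous_on_polar_sub; [exact HK | lra ..].
  - intros r t Hr Ht.
    assert (Hdist : Cmod (polar r t - z0)%C < d).
    { unfold z0. eapply Rle_lt_trans; [apply Cmod_polar_sub_le; lra |].
      assert (Rabs (r - r0) <= h) by (apply Rabs_le; lra).
      assert (Rabs (t - t0) <= h) by (apply Rabs_le; lra).
      assert (r0 * Rabs (t - t0) <= r0 * h) by (apply Rmult_le_compat_l; lra). nra. }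
    specialize (Hcont _ Hdist). unfold B.
    pose proof (Cmod_triangle (K (polar r t) - K z0) (K z0)).
    replace (K (polar r t) - K z0 + K z0)%C with (K (polar r t)) in H by ring. lra.
  - replace (r0 + h - (r0 - h)) with (2 * h) by ring. replace (t0 + h - (t0 - h)) with (2 * h) by ring.
    assert (0 <= h * B) by nra. nra.
Qed.

End ExceptionalPoint.

Definition circle_int (K : C -> C) (rho c : R) : C := arc_int K rho c (c + 2 * PI).

Lemma circle_int_eq_of_boundary_int K r1 r2 c :
  boundary_int K r1 r2 c (c + 2 * PI) = 0%C -> circle_int K r1 c = circle_int K r2 c.
Proof.
  intros HJ. unfold boundary_int, circle_int, ray_int in *.
  (* the two radial sides of the annulus are the same segment, traversed both ways *)
  assert (E : ray_integrand K (c + 2 * PI) = ray_integrand K c)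
    by (apply functional_extensionality; intros r; unfold ray_integrand, polar; rewrite cis_add_2PI; reflexivity).
  rewrite E in HJ.
  set (X := RInt_C (ray_integrand K c) r1 r2) in HJ.
  apply (f_equal (fun w => (w + arc_int K r1 c (c + 2 * PI))%C)) in HJ.
  replace (X + arc_int K r2 c (c + 2 * PI) - X - arc_int K r1 c (c + 2 * PI) + arc_int K r1 c (c + 2 * PI))%C
    with (arc_int K r2 c (c + 2 * PI)) in HJ by ring.
  rewrite HJ. ring.
Qed.

Lemma circle_int_annulus K r1 r2 c : 0 <= r1 <= r2 ->
  holomorphic_on_polar K r1 r2 c (c + 2 * PI) -> circle_int K r1 c = circle_int K r2 c.
Proof.
  intros Hr HH. apply circle_int_eq_of_boundary_int, goursat_polar; try lra.
  - pose proof PI_RGT_0; lra.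
  - exact HH.
Qed.

Lemma Cmod_circle_int_le K rho c B : 0 <= rho -> continuous_on_polar K rho rho c (c + 2 * PI) ->
  (forall t, c <= t <= c + 2 * PI -> Cmod (K (polar rho t)) <= B) ->
  Cmod (circle_int K rho c) <= 2 * PI * rho * B.
Proof.
  intros Hr HK HB. pose proof PI_RGT_0.
  replace (2 * PI * rho * B) with ((c + 2 * PI - c) * (rho * B)) by ring.
  eapply is_RInt_C_Cmod_le; [lra | |
    apply (RInt_correct (V:=C_R_CompleteNormedModule)), (ex_RInt_arc K rho rho c (c + 2 * PI)); auto; lra].
  intros t Ht. unfold arc_integrand. rewrite !Cmod_mult, Cmod_Ci, Cmod_polar by lra.
  specialize (HB t Ht). pose proof (Cmod_ge_0 (K (polar rho t))).
  rewrite Rmult_1_l, Rmult_comm. apply Rmult_le_compat_l; lra.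
Qed.

Lemma circle_int_plus K G rho c :
  continuous_on_polar K rho rho c (c + 2 * PI) -> continuous_on_polar G rho rho c (c + 2 * PI) ->
  circle_int (fun z => K z + G z)%C rho c = (circle_int K rho c + circle_int G rho c)%C.
Proof.
  intros HK HG. pose proof PI_RGT_0. unfold circle_int, arc_int.
  assert (E : arc_integrand (fun z => K z + G z)%C rho
              = fun t => (arc_integrand K rho t + arc_integrand G rho t)%C)
    by (apply functional_extensionality; intros t; unfold arc_integrand; ring).
  rewrite E. apply (RInt_plus (V:=C_R_CompleteNormedModule));
    [apply (ex_RInt_arc K rho rho c (c + 2 * PI)) | apply (ex_RInt_arc G rho rho c (c + 2 * PI))]; auto; lra.
Qed.

Lemma circle_int_scal K rho c (w : C) : continuous_on_polar K rho rho c (c + 2 * PI) ->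
  circle_int (fun z => w * K z)%C rho c = (w * circle_int K rho c)%C.
Proof.
  intros HK. pose proof PI_RGT_0. unfold circle_int, arc_int.
  assert (E : arc_integrand (fun z => w * K z)%C rho = fun t => (w * arc_integrand K rho t)%C)
    by (apply functional_extensionality; intros t; unfold arc_integrand; ring).
  rewrite E. apply (is_RInt_unique (V:=C_R_CompleteNormedModule)), is_RInt_C_mult.
  apply (RInt_correct (V:=C_R_CompleteNormedModule)), (ex_RInt_arc K rho rho c (c + 2 * PI)); auto; lra.
Qed.

Lemma circle_int_ext K G rho c :
  (forall t, c <= t <= c + 2 * PI -> K (polar rho t) = G (polar rho t)) ->
  circle_int K rho c = circle_int G rho c.
Proof.
  intros H. pose proof PI_RGT_0. unfold circle_int, arc_int.
  apply (RInt_ext (V:=C_R_CompleteNormedModule)). intros x Hx.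
  rewrite Rmin_left, Rmax_right in Hx by lra. unfold arc_integrand. rewrite H by lra. reflexivity.
Qed.

Lemma continuous_on_circle_of_holomorphic K rho c :
  (forall t, c <= t <= c + 2 * PI -> ex_derive_C K (polar rho t)) ->
  continuous_on_polar K rho rho c (c + 2 * PI).
Proof. intros H r t Hr Ht. replace r with rho by lra. apply ex_derive_C_continuous, H, Ht. Qed.

Lemma circle_int_inv rho c : 0 < rho -> circle_int Cinv rho c = (RtoC (2 * PI) * Ci)%C.
Proof.
  intros Hr. unfold circle_int, arc_int.
  rewrite (RInt_ext (V:=C_R_CompleteNormedModule) _ (fun _ => Ci)).
  - rewrite RInt_const, scal_C_R. replace (c + 2 * PI - c) with (2 * PI) by ring. reflexivity.
  - intros x _. unfold arc_integrand.
    change (@eq C (/ polar rho x * (Ci * polar rho x))%C Ci). field. apply polar_neq0, Hr.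
Qed.

(** The circle integral of [1/(z - a) - 1/z] does not depend on the radius
    [rho > |a|] and is [O(1/rho)], hence vanishes. *)
Lemma circle_int_inv_sub a rho c : Cmod a < rho ->
  circle_int (fun z => / (z - a))%C rho c = (RtoC (2 * PI) * Ci)%C.
Proof.
  intros Ha. pose proof PI_RGT_0. pose proof (Cmod_ge_0 a).
  set (V := fun z => (/ (z - a) - / z)%C).
  assert (HV : forall r t, Cmod a < r -> ex_derive_C V (polar r t)).
  { intros r t Hr. apply ex_derive_C_minus.
    - apply ex_derive_C_inv; [apply ex_derive_C_sub_const | apply polar_sub_neq0, Hr].
    - apply ex_derive_C_inv; [apply ex_derive_C_id | apply polar_neq0; lra]. }
  assert (HV0 : circle_int V rho c = 0%C).
  { apply Cmod_eq_0, Rle_antisym; [| apply Cmod_ge_0].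
    apply (Rle_0_of_le_mul_small _ (2 * PI * Cmod a) (/ rho)); [apply Rinv_0_lt_compat; lra |].
    intros h Hh. set (r := / h + Cmod a).
    assert (Hrh : r - Cmod a = / h) by (unfold r; ring).
    assert (Hr : rho < r).
    { assert (rho < / h) by (rewrite <- (Rinv_inv rho) at 1; apply Rinv_lt_contravar; [| lra];
                             apply Rmult_lt_0_compat; [lra | apply Rinv_0_lt_compat; lra]).
      unfold r. lra. }
    rewrite (circle_int_annulus V rho r c) by (try lra; intros r' t Hr' _; apply HV; lra).
    replace (2 * PI * Cmod a * h) with (2 * PI * r * (Cmod a / (r * (r - Cmod a))))
      by (rewrite Hrh; field; split; lra).
    apply Cmod_circle_int_le; [lra | apply continuous_on_circle_of_holomorphic; intros; apply HV; lra |].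
    intros t _. unfold V.
    assert (Hne := polar_sub_neq0 r t a ltac:(lra)). assert (Hp := polar_neq0 r t ltac:(lra)).
    replace (/ (polar r t - a) - / polar r t)%C with (a / (polar r t * (polar r t - a)))%C by (field; auto).
    rewrite Cmod_div, Cmod_mult, Cmod_polar by (try lra; apply Cmult_neq_0; auto).
    unfold Rdiv. apply Rmult_le_compat_l; [apply Cmod_ge_0 |].
    apply Rinv_le_contravar; [nra | apply Rmult_le_compat_l; [lra | apply Cmod_polar_sub_ge; lra]]. }
  assert (Hne : forall t, (polar rho t - a)%C <> 0%C) by (intros t; apply polar_sub_neq0, Ha).
  rewrite (circle_int_ext _ (fun z => V z + / z)%C) by (intros t _; unfold V; ring).
  rewrite circle_int_plus, HV0, circle_int_inv; try lra; [ring | |];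
    apply continuous_on_circle_of_holomorphic; intros t _.
  - apply HV. lra.
  - apply ex_derive_C_inv; [apply ex_derive_C_id | apply polar_neq0; lra].
Qed.

Definition holomorphic_punctured_disk (F : C -> C) : Prop :=
  forall z, 0 < Cmod z < 1 -> ex_derive_C F z.

Definition bounded_near_0 (F : C -> C) : Prop :=
  exists B d, 0 < d /\ forall z, 0 < Cmod z < d -> Cmod (F z) <= B.

(** The circle integrals do not depend on the radius and are [O(radius)]. *)
Lemma circle_int_bounded_punctured_eq0 K m c r : 0 < r < m ->
  (forall z, 0 < Cmod z < m -> ex_derive_C K z) -> bounded_near_0 K ->
  circle_int K r c = 0%C.
Proof.
  intros Hr HK [B [d [Hd HB]]].
  assert (HKp : forall s t, 0 < s < m -> ex_derive_C K (polar s t))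
    by (intros s t Hs; apply HK; rewrite Cmod_polar; lra).
  apply Cmod_eq_0, Rle_antisym; [| apply Cmod_ge_0].
  apply (Rle_0_of_le_mul_small _ (2 * PI * B) (Rmin r d)); [apply Rmin_pos; lra |].
  intros h Hh. pose proof (Rmin_l r d). pose proof (Rmin_r r d).
  rewrite <- (circle_int_annulus K h r c) by (try lra; intros s t Hs _; apply HKp; lra).
  replace (2 * PI * B * h) with (2 * PI * h * B) by ring.
  apply Cmod_circle_int_le; [lra | |].
  - apply continuous_on_circle_of_holomorphic. intros t _. apply HKp. lra.
  - intros t _. apply HB. rewrite Cmod_polar; lra.
Qed.

(** [L] is the value given at [a] itself (later [F'(a)]). *)
Definition diff_quot (F : C -> C) (a L w : C) : C :=
  if Req_EM_T (Cmod (w - a)%C) 0 then L else ((F w - F a) / (w - a))%C.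

Lemma diff_quot_at F a L : diff_quot F a L a = L.
Proof.
  unfold diff_quot. destruct (Req_EM_T _ _) as [_|E]; auto.
  exfalso. apply E. replace (a - a)%C with (RtoC 0) by ring. apply Cmod_0.
Qed.

Lemma diff_quot_neq F a L w : w <> a -> diff_quot F a L w = ((F w - F a) / (w - a))%C.
Proof.
  intros H. unfold diff_quot. destruct (Req_EM_T _ _) as [E|E]; auto.
  apply Cmod_sub_eq0 in E. contradiction.
Qed.

Lemma diff_quot_holomorphic F a L z :
  holomorphic_punctured_disk F -> 0 < Cmod z < 1 -> z <> a -> ex_derive_C (diff_quot F a L) z.
Proof.
  intros HF Hz Hza.
  assert (Hd : 0 < Cmod (z - a)%C)
    by (apply Cmod_gt_0; intro E; apply Hza, Cmod_sub_eq0; rewrite E; apply Cmod_0).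
  apply (ex_derive_C_ext_loc (fun w => (F w - F a) / (w - a))%C).
  - apply (locally_C_ball z (Cmod (z - a)%C)); auto. intros w Hw.
    rewrite diff_quot_neq; auto. intros ->.
    replace (a - z)%C with (- (z - a))%C in Hw by ring. rewrite Cmod_opp in Hw. lra.
  - apply ex_derive_C_div.
    + apply ex_derive_C_minus; [apply HF, Hz | apply ex_derive_C_const].
    + apply ex_derive_C_sub_const.
    + intro E. apply Hza. replace z with ((z - a) + a)%C by ring. rewrite E. ring.
Qed.

Lemma diff_quot_continuous_at F a L : is_derive_C F a L -> continuous_C (diff_quot F a L) a.
Proof.
  intros [_ Hd]. apply continuous_C_of_eps. intros eps Heps.
  destruct (Hd a (fun P HP => HP) (mkposreal eps Heps)) as [d Hdd]. simpl in Hdd.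
  exists d. split; [apply cond_pos |]. intros w Hw. rewrite diff_quot_at.
  destruct (classic (w = a)) as [->|E].
  - rewrite diff_quot_at. replace (L - L)%C with (RtoC 0) by ring. rewrite Cmod_0. lra.
  - rewrite diff_quot_neq by auto. specialize (Hdd w Hw).
    change (Cmod (F w - F a - (w - a) * L)%C <= eps * Cmod (w - a)%C) in Hdd.
    assert (Hwa : (w - a)%C <> 0%C) by (intro E2; apply E; replace w with ((w - a) + a)%C by ring; rewrite E2; ring).
    assert (0 < Cmod (w - a)%C) by (apply Cmod_gt_0; auto).
    replace ((F w - F a) / (w - a) - L)%C with ((F w - F a - (w - a) * L) / (w - a))%C by (field; auto).
    rewrite Cmod_div by auto.
    apply (Rmult_le_reg_r (Cmod (w - a)%C)); auto.
    replace (Cmod (F w - F a - (w - a) * L)%C / Cmod (w - a)%C * Cmod (w - a)%C)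
      with (Cmod (F w - F a - (w - a) * L)%C) by (field; lra).
    exact Hdd.
Qed.

Lemma diff_quot_continuous_on_polar F a L r1 r2 c1 c2 :
  holomorphic_punctured_disk F -> is_derive_C F a L -> 0 < r1 -> r2 < 1 ->
  continuous_on_polar (diff_quot F a L) r1 r2 c1 c2.
Proof.
  intros HF HL Hr1 Hr2 r t Hr Ht.
  destruct (classic (polar r t = a)) as [->|E].
  - apply diff_quot_continuous_at, HL.
  - apply ex_derive_C_continuous, diff_quot_holomorphic; auto. rewrite Cmod_polar; lra.
Qed.

Lemma diff_quot_bounded_near_0 (F : C -> C) (a L : C) : bounded_near_0 F -> a <> 0%C -> bounded_near_0 (diff_quot F a L).
Proof.
  intros [B [d [Hd HB]]] Ha. assert (Hm : 0 < Cmod a) by (apply Cmod_gt_0, Ha).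
  exists ((B + Cmod (F a)) / (Cmod a / 2)), (Rmin d (Cmod a / 2)).
  split; [apply Rmin_pos; lra |]. intros z Hz.
  pose proof (Rmin_l d (Cmod a / 2)). pose proof (Rmin_r d (Cmod a / 2)).
  assert (Hza : Cmod a / 2 <= Cmod (z - a)%C).
  { assert (Cmod a <= Cmod (z - a)%C + Cmod z)
      by (replace a with (- (z - a) + z)%C at 1 by ring; eapply Rle_trans;
          [apply Cmod_triangle | rewrite Cmod_opp; lra]).
    lra. }
  rewrite diff_quot_neq by (intros ->; lra).
  rewrite Cmod_div by (intro E; rewrite E, Cmod_0 in Hza; lra).
  assert (Cmod (F z - F a)%C <= B + Cmod (F a))
    by (eapply Rle_trans; [apply Cmod_triangle | rewrite Cmod_opp; specialize (HB z ltac:(lra)); lra]).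
  unfold Rdiv. apply Rmult_le_compat; [apply Cmod_ge_0 | apply Rlt_le, Rinv_0_lt_compat; lra | auto |].
  apply Rinv_le_contravar; lra.
Qed.

(** The circle is parametrised from the angle opposite to [a], so that [a]
    lies in the interior of the polar annulus to which Goursat is applied. *)
Lemma cauchy_integral_formula F a rho :
  holomorphic_punctured_disk F -> bounded_near_0 F -> 0 < Cmod a < rho -> rho < 1 ->
  exists c, circle_int (fun z => F z / (z - a))%C rho c = (RtoC (2 * PI) * Ci * F a)%C.
Proof.
  intros HF HFb Ha Hr1. pose proof PI_RGT_0.
  set (m := Cmod a) in *.
  assert (Ha0 : a <> 0%C) by (intro E; unfold m in Ha; rewrite E, Cmod_0 in Ha; lra).
  destruct (HF a ltac:(unfold m in *; lra)) as [L HL].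
  destruct (polar_exists a Ha0) as [th Hth]. fold m in Hth.
  exists (th - PI). set (c := th - PI). set (K := diff_quot F a L).
  assert (Hsmall : circle_int K (m / 2) c = 0%C).
  { apply (circle_int_bounded_punctured_eq0 K m); [lra | | apply diff_quot_bounded_near_0; auto].
    intros z Hz. apply diff_quot_holomorphic; [auto | lra | intros ->; fold m in Hz; lra]. }
  assert (Hannulus : circle_int K (m / 2) c = circle_int K rho c).
  { apply circle_int_eq_of_boundary_int, (goursat_polar_except K _ _ _ _ m th); try (unfold c; lra).
    - apply diff_quot_continuous_on_polar; auto; lra.
    - intros r t Hr Ht Hne. apply diff_quot_holomorphic; auto.
      + rewrite Cmod_polar; lra.
      + rewrite Hth. intros E. apply polar_inj in E; try lra.
        apply Rabs_le. unfold c in Ht. lra. }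
  assert (Hne : forall t, (polar rho t - a)%C <> 0%C) by (intros t; apply polar_sub_neq0; unfold m in *; lra).
  assert (Hcirc : continuous_on_polar (fun z => / (z - a))%C rho rho c (c + 2 * PI)).
  { apply continuous_on_circle_of_holomorphic. intros t _.
    apply ex_derive_C_inv; [apply ex_derive_C_sub_const | apply Hne]. }
  rewrite (circle_int_ext _ (fun z => K z + F a * / (z - a))%C).
  2: { intros t _. unfold K. rewrite diff_quot_neq by (intro E; apply (Hne t); rewrite E; ring).
       field. apply Hne. }
  rewrite circle_int_plus, circle_int_scal, <- Hannulus, Hsmall, circle_int_inv_sub; auto.
  - ring.
  - unfold m in *; lra.
  - apply diff_quot_continuous_on_polar; auto; lra.
  - intros r t Hr Ht. apply continuous_C_mult; [apply continuous_const | apply Hcirc; auto].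
Qed.

Lemma le_of_pow_le_pow_mul (x y K : R) : 0 <= x -> 0 <= y -> (forall n, x ^ n <= y ^ n * K) -> x <= y.
Proof.
  intros Hx Hy H. destruct (Rle_or_lt x y) as [|Hxy]; [assumption | exfalso].
  destruct (Req_dec y 0) as [Ey|Ey].
  { specialize (H 1%nat). simpl in H. rewrite Ey in H. lra. }
  assert (Hq : Rabs (x / y) > 1).
  { rewrite Rabs_right by (apply Rle_ge, Rdiv_le_0_compat; lra).
    apply Rlt_gt, (Rmult_lt_reg_r y); [lra |]. unfold Rdiv. rewrite Rmult_assoc, Rinv_l; lra. }
  destruct (Pow_x_infinity (x / y) Hq (K + 1)) as [N HN].
  specialize (HN N (Nat.le_refl N)). specialize (H N).
  assert (Hyn : 0 < y ^ N) by (apply pow_lt; lra).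
  rewrite Rabs_right in HN by (apply Rle_ge, pow_le, Rdiv_le_0_compat; lra).
  unfold Rdiv in HN. rewrite Rpow_mult_distr, pow_inv in HN.
  apply (Rmult_le_compat_r (y ^ N)) in H; [| lra].
  apply (Rmult_ge_compat_r (y ^ N)) in HN; [| lra].
  rewrite Rmult_assoc, Rinv_l in HN by lra. nra.
Qed.

Lemma le_of_le_div_near_1 (x M Cm : R) : 0 <= Cm < 1 ->
  (forall rho, Cm < rho < 1 -> x <= M / rho) -> x <= M.
Proof.
  intros Hm H. apply Rminus_le, (Rle_0_of_le_mul_small _ (2 * Rabs M) (Rmin (1 / 2) (1 - Cm)));
    [apply Rmin_pos; lra |].
  intros h Hh. pose proof (Rmin_l (1 / 2) (1 - Cm)). pose proof (Rmin_r (1 / 2) (1 - Cm)).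
  specialize (H (1 - h) ltac:(lra)).
  (* M / (1 - h) - M = M h / (1 - h), and 1 - h >= 1/2 *)
  replace (M / (1 - h)) with (M + M * h / (1 - h)) in H by (field; lra).
  assert (M * h / (1 - h) <= 2 * Rabs M * h).
  { apply (Rmult_le_reg_r (1 - h)); [lra |].
    replace (M * h / (1 - h) * (1 - h)) with (M * h) by (field; lra).
    assert (M * h <= Rabs M * h) by (apply Rmult_le_compat_r; [lra | apply Rle_abs]).
    assert (0 <= Rabs M * h * (1 - 2 * h))
      by (apply Rmult_le_pos; [apply Rmult_le_pos; [apply Rabs_pos | lra] | lra]).
    nra. }
  lra.
Qed.

Lemma Cmod_le_of_circle_bound F a rho B :
  holomorphic_punctured_disk F -> bounded_near_0 F -> 0 < Cmod a < rho -> rho < 1 ->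
  (forall t, Cmod (F (polar rho t)) <= B) -> Cmod (F a) <= B * (rho / (rho - Cmod a)).
Proof.
  intros HF HFb Ha Hr HB. pose proof PI_RGT_0.
  destruct (cauchy_integral_formula F a rho HF HFb Ha Hr) as [c Hc].
  assert (Hne : forall t, (polar rho t - a)%C <> 0%C) by (intros t; apply polar_sub_neq0; lra).
  assert (Hbd : Cmod (circle_int (fun z => F z / (z - a))%C rho c) <= 2 * PI * rho * (B / (rho - Cmod a))).
  { apply Cmod_circle_int_le; [lra | |].
    - apply continuous_on_circle_of_holomorphic. intros t _. apply ex_derive_C_div.
      + apply HF. rewrite Cmod_polar; lra.
      + apply ex_derive_C_sub_const.
      + apply Hne.
    - intros t _. rewrite Cmod_div by apply Hne.
      pose proof (Cmod_polar_sub_ge rho t a ltac:(lra)).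
      pose proof (HB t). pose proof (Cmod_ge_0 (F (polar rho t))).
      unfold Rdiv. apply Rmult_le_compat; [lra | apply Rlt_le, Rinv_0_lt_compat; lra | lra |].
      apply Rinv_le_contravar; lra. }
  rewrite Hc, !Cmod_mult, Cmod_Ci, Cmod_R, Rabs_right in Hbd by lra.
  apply (Rmult_le_reg_l (2 * PI)); [lra |].
  replace (2 * PI * (B * (rho / (rho - Cmod a)))) with (2 * PI * rho * (B / (rho - Cmod a))) by (field; lra).
  lra.
Qed.

Lemma div_id_bounded_near_0 (g : C -> C) : ex_derive_C g (RtoC 0) -> g (RtoC 0) = 0%C ->
  bounded_near_0 (fun z => g z / z)%C.
Proof.
  intros [L [_ HL]] Hg0.
  destruct (HL (RtoC 0) (fun P HP => HP) (mkposreal 1 Rlt_0_1)) as [d Hd]. simpl in Hd.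
  exists (Cmod L + 1), d. split; [apply cond_pos |]. intros z Hz.
  assert (Hz0 : z <> 0%C) by (intro E; rewrite E, Cmod_0 in Hz; lra).
  assert (Hzd : Cmod (z - 0)%C < d) by (replace (z - 0)%C with z by ring; lra).
  specialize (Hd z Hzd). change (Cmod (g z - g 0 - (z - 0) * L)%C <= 1 * Cmod (z - 0)%C) in Hd.
  rewrite Hg0 in Hd. replace (g z - 0 - (z - 0) * L)%C with (g z - z * L)%C in Hd by ring.
  replace (z - 0)%C with z in Hd by ring.
  rewrite Cmod_div by auto.
  assert (Cmod (g z) <= (Cmod L + 1) * Cmod z).
  { replace (g z) with ((g z - z * L) + z * L)%C by ring. eapply Rle_trans; [apply Cmod_triangle |].
    rewrite Cmod_mult. lra. }
  apply (Rmult_le_reg_r (Cmod z)); [lra |].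
  replace (Cmod (g z) / Cmod z * Cmod z) with (Cmod (g z)) by (field; lra). lra.
Qed.

(** The maximum principle for [g z / z] is obtained by applying Cauchy's
    estimate to its powers and taking n-th roots. *)
Theorem schwarz_lemma (g : C -> C) (M : R) :
  (forall z, Cmod z < 1 -> ex_derive_C g z) -> g 0%C = 0%C ->
  (forall z, Cmod z < 1 -> Cmod (g z) <= M) ->
  forall a, Cmod a < 1 -> Cmod (g a) <= M * Cmod a.
Proof.
  intros Hg Hg0 HM a Ha.
  destruct (Req_dec (Cmod a) 0) as [E|E].
  { apply Cmod_eq_0 in E. subst a. rewrite Hg0, Cmod_0. lra. }
  assert (Ha0 : 0 < Cmod a) by (pose proof (Cmod_ge_0 a); lra).
  set (q := fun z => (g z / z)%C).
  assert (Hqn : forall n, holomorphic_punctured_disk (fun z => q z ^ n)%C).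
  { intros n z Hz. apply ex_derive_C_pow, ex_derive_C_div; [apply Hg; lra | apply ex_derive_C_id |].
    intro E2. rewrite E2, Cmod_0 in Hz. lra. }
  destruct (div_id_bounded_near_0 g ltac:(apply Hg; rewrite Cmod_0; lra) Hg0) as [B [d [Hd HB]]].
  assert (Hqnb : forall n, bounded_near_0 (fun z => q z ^ n)%C).
  { intros n. exists (B ^ n), d. split; [exact Hd |]. intros z Hz. rewrite Cmod_pow.
    apply pow_incr. split; [apply Cmod_ge_0 | apply HB, Hz]. }
  assert (Hqa : Cmod (q a) <= M).
  { apply (le_of_le_div_near_1 _ _ (Cmod a)); [lra |]. intros rho Hr.
    apply (le_of_pow_le_pow_mul _ _ (rho / (rho - Cmod a))); [apply Cmod_ge_0 | |].
    - apply Rdiv_le_0_compat; [| lra].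
      apply (Rle_trans _ (Cmod (g (RtoC 0)))); [apply Cmod_ge_0 | apply HM; rewrite Cmod_0; lra].
    - intros n. rewrite <- Cmod_pow. apply (Cmod_le_of_circle_bound (fun z => q z ^ n)%C a rho); auto; [lra | lra |].
      intros t. rewrite Cmod_pow. apply pow_incr. split; [apply Cmod_ge_0 |].
      unfold q. rewrite Cmod_div, Cmod_polar by (try apply polar_neq0; lra).
      apply Rmult_le_compat_r; [apply Rlt_le, Rinv_0_lt_compat; lra | apply HM; rewrite Cmod_polar; lra]. }
  unfold q in Hqa. rewrite Cmod_div in Hqa by (intro E2; rewrite E2, Cmod_0 in Ha0; lra).
  apply (Rmult_le_compat_r (Cmod a)) in Hqa; [| lra].
  replace (Cmod (g a) / Cmod a * Cmod a) with (Cmod (g a)) in Hqa by (field; lra). exact Hqa.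
Qed.

Lemma Cmod_sq (z : C) : Cmod z ^ 2 = fst z * fst z + snd z * snd z.
Proof. rewrite Cmod2_alt. unfold Re, Im. ring. Qed.

Lemma Cmod_1_sub_conj_mul_sq (z w : C) :
  Cmod (1 - Cconj w * z)%C ^ 2 = Cmod (z - w)%C ^ 2 + (1 - Cmod z ^ 2) * (1 - Cmod w ^ 2).
Proof. rewrite !Cmod_sq. destruct z, w; simpl; ring. Qed.

Definition mobius (w x : C) : C := ((x + w) / (1 + Cconj w * x))%C.

Lemma Cmod_mobius_num_lt (w x : C) : Cmod w < 1 -> Cmod x < 1 ->
  Cmod (x + w)%C < Cmod (1 + Cconj w * x)%C.
Proof.
  intros Hw Hx. pose proof (Cmod_1_sub_conj_mul_sq x (- w)) as E.
  replace (1 - Cconj (- w) * x)%C with (1 + Cconj w * x)%C in E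
    by (destruct w; apply injective_projections; simpl; ring).
  replace (x - - w)%C with (x + w)%C in E by ring. rewrite Cmod_opp in E.
  pose proof (Cmod_ge_0 w). pose proof (Cmod_ge_0 x).
  pose proof (Cmod_ge_0 (x + w)%C). pose proof (Cmod_ge_0 (1 + Cconj w * x)%C).
  assert (0 < (1 - Cmod x ^ 2) * (1 - Cmod w ^ 2)) by (apply Rmult_lt_0_compat; nra).
  nra.
Qed.

Lemma mobius_den_neq0 (w x : C) : Cmod w < 1 -> Cmod x < 1 -> (1 + Cconj w * x)%C <> 0%C.
Proof.
  intros Hw Hx E. pose proof (Cmod_mobius_num_lt w x Hw Hx).
  rewrite E, Cmod_0 in H. pose proof (Cmod_ge_0 (x + w)%C). lra.
Qed.

Lemma Cmod_mobius_lt1 (w x : C) : Cmod w < 1 -> Cmod x < 1 -> Cmod (mobius w x) < 1.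
Proof.
  intros Hw Hx. unfold mobius. rewrite Cmod_div by (apply mobius_den_neq0; auto).
  pose proof (Cmod_mobius_num_lt w x Hw Hx).
  apply (Rmult_lt_reg_r (Cmod (1 + Cconj w * x)%C)); [pose proof (Cmod_ge_0 (x + w)%C); lra |].
  unfold Rdiv. rewrite Rmult_assoc, Rinv_l, Rmult_1_r, Rmult_1_l; [lra |].
  pose proof (Cmod_ge_0 (x + w)%C). lra.
Qed.

Lemma ex_derive_C_mobius (w x : C) : Cmod w < 1 -> Cmod x < 1 -> ex_derive_C (mobius w) x.
Proof.
  intros Hw Hx. apply ex_derive_C_div; [| | apply mobius_den_neq0; auto].
  - apply ex_derive_C_plus; [apply ex_derive_C_id | apply ex_derive_C_const].
  - apply ex_derive_C_plus; [apply ex_derive_C_const | apply ex_derive_C_mult; [apply ex_derive_C_const | apply ex_derive_C_id]].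
Qed.

Lemma mobius_0 (w : C) : mobius w 0%C = w.
Proof. unfold mobius. replace (1 + Cconj w * 0)%C with (RtoC 1) by ring. field. Qed.

Lemma mobius_opp (a : C) : mobius a (- a)%C = 0%C.
Proof. unfold mobius. replace (- a + a)%C with (RtoC 0) by ring. unfold Cdiv. ring. Qed.

Lemma mobius_real_self (r : R) : 0 <= r -> mobius (RtoC r) (RtoC r) = RtoC (2 * r / (1 + r * r)).
Proof.
  intros Hr. unfold mobius.
  replace (Cconj (RtoC r)) with (RtoC r) by (apply injective_projections; simpl; ring).
  rewrite <- RtoC_plus, <- RtoC_mult, <- RtoC_plus, <- RtoC_div by nra. f_equal. field. nra.
Qed.

Lemma mobius_quotient (z w : C) : Cmod w < 1 -> (1 - Cconj w * z)%C <> 0%C ->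
  mobius w ((z - w) / (1 - Cconj w * z))%C = z.
Proof.
  intros Hw Hden.
  assert (Hw1 : (1 - Cconj w * w)%C <> 0%C).
  { rewrite Cmult_comm, <- Cmod2_conj, <- RtoC_minus. intro E. apply RtoC_inj in E.
    pose proof (Cmod_ge_0 w). nra. }
  unfold mobius. field. split; [exact Hden |].
  replace (1 - Cconj w * z + Cconj w * (z - w))%C with (1 - Cconj w * w)%C by ring. exact Hw1.
Qed.

(** With [A = |1 - conj w z|], [B = |z - w|] and [S = sqrt((1-|z|^2)(1-|w|^2))],
    so that [S^2 = A^2 - B^2], the number [r = B / (A + S)] satisfies
    [2 r / (1 + r^2) = B / A]: the map [mobius r] sends [r] to [B / A]. *)
Lemma half_pseudo_distance_spec A B S : 0 < A -> 0 < S -> 0 < B -> S * S = A * A - B * B ->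
  2 * (B / (A + S)) / (1 + (B / (A + S)) * (B / (A + S))) = B / A.
Proof.
  intros HA HS HB HSS.
  assert (E : (A + S) * (A + S) + B * B = 2 * A * (A + S)) by nra.
  replace (1 + B / (A + S) * (B / (A + S))) with (((A + S) * (A + S) + B * B) / ((A + S) * (A + S)))
    by (field; lra).
  rewrite E. field. lra.
Qed.

(** The map [mobius w (u * mobius r x)], with [u] the unit complex number
    in the direction of [(z - w) / (1 - conj w z)], sends [r] to [z] and
    [-r] to [w]. *)
Lemma exists_disk_map_through (z w : C) : Cmod z < 1 -> Cmod w < 1 -> z <> w ->
  let r := Cmod (z - w)%C / (Cmod (1 - Cconj w * z)%C + sqrt ((1 - Cmod z ^ 2) * (1 - Cmod w ^ 2))) in
  0 < r < 1 /\ exists phi : C -> C,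
    (forall x, Cmod x < 1 -> Cmod (phi x) < 1 /\ ex_derive_C phi x) /\ phi (RtoC r) = z /\ phi (- RtoC r)%C = w.
Proof.
  intros Hz Hw Hzw r.
  set (A := Cmod (1 - Cconj w * z)%C) in r. set (B := Cmod (z - w)%C) in r.
  set (P := (1 - Cmod z ^ 2) * (1 - Cmod w ^ 2)) in r. set (S := sqrt P) in r.
  assert (HP : 0 < P) by (unfold P; pose proof (Cmod_ge_0 z); pose proof (Cmod_ge_0 w);
                          apply Rmult_lt_0_compat; nra).
  assert (HS : 0 < S) by (apply sqrt_lt_R0, HP).
  assert (HSS : S * S = P) by (apply sqrt_sqrt; lra).
  assert (HI : A ^ 2 = B ^ 2 + P) by apply Cmod_1_sub_conj_mul_sq.
  assert (HB : 0 < B) by (apply Cmod_gt_0; intro E; apply Hzw, Cmod_sub_eq0; unfold B; rewrite E; apply Cmod_0).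
  assert (HA : 0 < A) by (pose proof (Cmod_ge_0 (1 - Cconj w * z)%C); fold A in H; nra).
  assert (Hr : 0 < r < 1).
  { unfold r. split; [apply Rdiv_lt_0_compat; lra |].
    apply (Rmult_lt_reg_r (A + S)); [lra |]. unfold Rdiv. rewrite Rmult_assoc, Rinv_l; nra. }
  split; [exact Hr |].
  assert (Hrho : 2 * r / (1 + r * r) = B / A) by (apply half_pseudo_distance_spec; nra).
  assert (Hrho0 : 0 < B / A) by (apply Rdiv_lt_0_compat; lra).
  assert (Hden : (1 - Cconj w * z)%C <> 0%C) by (intro E; unfold A in HA; rewrite E, Cmod_0 in HA; lra).
  set (c := ((z - w) / (1 - Cconj w * z))%C).
  assert (Hc : Cmod c = B / A) by (unfold c, A, B; rewrite Cmod_div; auto).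
  assert (Hrne : RtoC (B / A) <> 0%C) by (intro E; apply RtoC_inj in E; lra).
  set (u := (c / RtoC (B / A))%C).
  assert (Hu : Cmod u = 1) by (unfold u; rewrite Cmod_div, Hc, Cmod_R, Rabs_right by (auto; lra); field; lra).
  assert (Hrc : Cmod (RtoC r) < 1) by (rewrite Cmod_R, Rabs_right; lra).
  assert (Hin : forall x, Cmod x < 1 -> Cmod (u * mobius (RtoC r) x)%C < 1)
    by (intros x Hx; rewrite Cmod_mult, Hu, Rmult_1_l; apply Cmod_mobius_lt1; auto).
  exists (fun x => mobius w (u * mobius (RtoC r) x)%C). repeat split.
  - apply Cmod_mobius_lt1; auto.
  - apply (ex_derive_C_comp (mobius w) (fun y => u * mobius (RtoC r) y)%C).
    + apply ex_derive_C_mult; [apply ex_derive_C_const | apply ex_derive_C_mobius; auto].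
    + apply ex_derive_C_mobius; auto.
  - rewrite mobius_real_self, Hrho by lra.
    replace (u * RtoC (B / A))%C with c by (unfold u; field; auto).
    apply mobius_quotient; auto.
  - rewrite mobius_opp. replace (u * RtoC 0)%C with (RtoC 0) by ring. apply mobius_0.
Qed.

Lemma schwarz_pick_two_point (f : C -> C) (d : R) (z w : C) :
  (forall x, Cmod x < 1 -> ex_derive_C f x) ->
  (forall x y, Cmod x < 1 -> Cmod y < 1 -> Cmod (f x - f y)%C <= d) ->
  Cmod z < 1 -> Cmod w < 1 ->
  Cmod (f z - f w)%C
  <= d * (Cmod (z - w)%C / (Cmod (1 - Cconj w * z)%C + sqrt ((1 - Cmod z ^ 2) * (1 - Cmod w ^ 2)))).
Proof.
  intros Hf Hd Hz Hw.
  assert (Hd0 : 0 <= d)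
    by (specialize (Hd z z Hz Hz); replace (f z - f z)%C with (RtoC 0) in Hd by ring; rewrite Cmod_0 in Hd; exact Hd).
  destruct (classic (z = w)) as [<-|Hzw].
  { replace (f z - f z)%C with (RtoC 0) by ring. replace (z - z)%C with (RtoC 0) by ring.
    rewrite Cmod_0. unfold Rdiv. lra. }
  destruct (exists_disk_map_through z w Hz Hw Hzw) as [Hr [phi [Hphi [Hpz Hpw]]]].
  set (r := Cmod (z - w)%C / _) in *.
  (* [x |-> f (phi x) - f (phi (-x))] vanishes at 0 and is bounded by [d] *)
  assert (Hs : Cmod (f (phi (RtoC r)) - f (phi (- RtoC r)%C))%C <= d * Cmod (RtoC r)).
  2: { rewrite Hpz, Hpw, Cmod_R, Rabs_right in Hs by lra. exact Hs. }
  apply (schwarz_lemma (fun x => f (phi x) - f (phi (- x)%C))%C d).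
  - intros x Hx. assert (Hx' : Cmod (- x)%C < 1) by (rewrite Cmod_opp; exact Hx).
    apply ex_derive_C_minus.
    + apply (ex_derive_C_comp f phi); [apply Hphi, Hx | apply Hf, Hphi, Hx].
    + apply (ex_derive_C_comp f (fun y => phi (- y)%C)); [| apply Hf, Hphi, Hx'].
      apply (ex_derive_C_comp phi Copp); [| apply Hphi, Hx'].
      apply (ex_derive_C_ext_loc (fun y => 0 - y)%C); [apply filter_forall; intros; ring |].
      apply ex_derive_C_minus; [apply ex_derive_C_const | apply ex_derive_C_id].
  - replace (- RtoC 0)%C with (RtoC 0) by ring. ring.
  - intros x Hx. apply Hd; apply Hphi; [| rewrite Cmod_opp]; exact Hx.
  - rewrite Cmod_R, Rabs_right; lra.
Qed.

Theorem mainTheorem10 (f : C -> C) :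
  analytic_on_disk f ->
  Rbar_lt (Finite 0) (diam_image_disk f) ->
  Rbar_lt (diam_image_disk f) p_infty ->
  forall z w : C, unit_disk z -> unit_disk w ->
    Cmod (f z - f w)%C / real (diam_image_disk f)
    <= Cmod (z - w)%C /
       (Cmod (1 - Cconj w * z)%C
        + sqrt ((1 - (Cmod z) ^ 2) * (1 - (Cmod w) ^ 2))).
Proof.
  intros Hf Hpos Hfin z w Hz Hw.
  assert (Hub := proj1 (Lub_Rbar_correct (fun r : R => exists z w : C,
    unit_disk z /\ unit_disk w /\ r = Cmod (f z - f w)%C))).
  unfold diam_image_disk in *.
  destruct (Lub_Rbar _) as [d| |]; simpl in Hpos, Hfin |- *; try contradiction.
  assert (Hd : forall x y, Cmod x < 1 -> Cmod y < 1 -> Cmod (f x - f y)%C <= d)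
    by (intros x y Hx Hy; apply Hub; exists x, y; repeat split; auto).
  assert (H := schwarz_pick_two_point f d z w Hf Hd Hz Hw).
  apply (Rmult_le_reg_r d); [exact Hpos |].
  replace (Cmod (f z - f w)%C / d * d) with (Cmod (f z - f w)%C) by (field; lra).
  rewrite Rmult_comm. exact H.
Qed.
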